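(* Let $n\geq 4$ and let $c$ be an exact $4$-coloring of $\mathcal{B}_n$ with $c(\emptyset)\neq c([n])$. Then $\mathcal{B}_n$ contains no rainbow induced copy of $\mathcal{B}_2$ if and only if $c$ is of Type 2, Type 3-1, Type 3-2, Type 4-1 or Type 4-2.
   Context: $\mathcal{B}_n$ is the Boolean lattice of subsets of $[n]$ under inclusion. For $X\subseteq Y$: $\mathcal{B}_{[X,Y]}=\{Z:X\subseteq Z\subseteq Y\}$, and $\mathcal{B}_{(X,Y)}$, $\mathcal{B}_{(X,Y]}$, $\mathcal{B}_{[X,Y)}$ are defined analogously with strict inclusion at the open ends. For $X\subsetneq Y$ define $\mathcal{B}^{Y\uparrow}_{(X,[n]]}=\{Z\in\mathcal{B}_{(X,[n]]}: Z\cap(Y\setminus X)\neq\emptyset\}$ and $\mathcal{B}^{X\downarrow}_{[\emptyset,Y)}=\{Z\in\mathcal{B}_{[\emptyset,Y)}: Y\setminus X\not\subseteq Z\}$. An exact $k$-coloring is a surjective map $c:\mathcal{B}_n\to[k]$. A rainbow induced copy of $\mathcal{B}_2$ is four sets $W_1\subsetneq W_2,W_3\subsetneq W_4$ with $W_2,W_3$ incomparable and pairwise distinct colors. ''Families $\mathcal{F}_1,\dots,\mathcal{F}_r$ are monochromatically colored with distinct colors'' means each is monochromatic and no two sets from different families share a color. In Types 2, 3-1, 3-2 there are $X_0,Y_0$ with $\emptyset\subsetneq X_0\subsetneq Y_0\subsetneq[n]$, $|Y_0|\ge|X_0|+2$. Type 2: the families $\mathcal{B}_{[\emptyset,Y_0]}\setminus\mathcal{B}_{[X_0,Y_0]}$,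 $\{X_0,Y_0\}$, $\mathcal{B}_{(X_0,Y_0)}$, $\mathcal{B}_{[X_0,[n]]}\setminus\mathcal{B}_{[X_0,Y_0]}$ are monochromatically colored with distinct colors, and each set in $\mathcal{B}_n\setminus(\mathcal{B}_{[\emptyset,Y_0]}\cup\mathcal{B}_{[X_0,[n]]})$ has the color of the first or the last family. Type 3-1: the families $\mathcal{B}_{[\emptyset,Y_0]}\setminus\mathcal{B}_{[X_0,Y_0]}$, $\{X_0\}\cup(\mathcal{B}^{Y_0\uparrow}_{(X_0,[n]]}\setminus\mathcal{B}_{(X_0,Y_0]})$, $\mathcal{B}_{(X_0,Y_0)}$, $\{Y_0\}$ are monochromatically colored with distinct colors, and each set in $\mathcal{B}_n\setminus(\mathcal{B}_{[\emptyset,Y_0]}\cup\mathcal{B}^{Y_0\uparrow}_{(X_0,[n]]})$ has the color of the first or the second family. Type 3-2: the families $\mathcal{B}_{[X_0,[n]]}\setminus\mathcal{B}_{[X_0,Y_0]}$, $\{Y_0\}\cup(\mathcal{B}^{X_0\downarrow}_{[\emptyset,Y_0)}\setminus\mathcal{B}_{[X_0,Y_0)})$, $\mathcal{B}_{(X_0,Y_0)}$, $\{X_0\}$ are monochromatically colored with distinct colors, and each set in $\mathcal{B}_n\setminus(\mathcal{B}_{[X_0,[n]]}\cup\mathcal{B}^{X_0\downarrow}_{[\emptyset,Y_0)})$ has the color of the first or the second family. Type 4-1: there are a set $X_0$ with $1\le|X_0|\le n-2$ and a nonempty family $\mathcal{Y}_0\subseteq\mathcal{B}_{(X_0,[n]]}$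 such that the families $\bigcup_{Y\in\mathcal{Y}_0}(\mathcal{B}_{[\emptyset,Y)}\setminus\mathcal{B}_{[X_0,Y)})$, $\{X_0\}$, $\mathcal{B}_{(X_0,[n]]}\setminus\mathcal{Y}_0$, $\mathcal{Y}_0$ are monochromatically colored with distinct colors, and each set in $\mathcal{B}_n\setminus(\mathcal{B}_{[X_0,[n]]}\cup\bigcup_{Y\in\mathcal{Y}_0}\mathcal{B}_{[\emptyset,Y)})$ has the color of the first or the third family. Type 4-2: there are a set $Y_0$ with $2\le|Y_0|\le n-1$ and a nonempty family $\mathcal{X}_0\subseteq\mathcal{B}_{(\emptyset,Y_0)}$ such that the families $\bigcup_{X\in\mathcal{X}_0}(\mathcal{B}_{(X,[n]]}\setminus\mathcal{B}_{(X,Y_0]})$, $\{Y_0\}$, $\mathcal{B}_{[\emptyset,Y_0)}\setminus\mathcal{X}_0$, $\mathcal{X}_0$ are monochromatically colored with distinct colors, and each set in $\mathcal{B}_n\setminus(\mathcal{B}_{[\emptyset,Y_0]}\cup\bigcup_{X\in\mathcal{X}_0}\mathcal{B}_{(X,[n]]})$ has the color of the first or the third family. *)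

(* Ground set [n] is the finType 'I_n; B_n is {set 'I_n}. *)
From mathcomp Require Import all_boot.
Set Implicit Arguments. Unset Strict Implicit. Unset Printing Implicit Defensive.

Section Defs.
Variables (T : finType) (k : nat).
Implicit Types (X Y Z : {set T}) (F G : {set {set T}}) (c : {set T} -> 'I_k).

Definition Bcc X Y : {set {set T}} := [set Z : {set T} | (X \subset Z) && (Z \subset Y)].
Definition Boo X Y : {set {set T}} := [set Z : {set T} | (X \proper Z) && (Z \proper Y)].
Definition Boc X Y : {set {set T}} := [set Z : {set T} | (X \proper Z) && (Z \subset Y)].
Definition Bco X Y : {set {set T}} := [set Z : {set T} | (X \subset Z) && (Z \proper Y)].

Definition Bup X Y : {set {set T}} :=
  [set Z in Boc X setT | Z :&: (Y :\: X) != set0].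
Definition Bdown X Y : {set {set T}} :=
  [set Z in Bco set0 Y | ~~ ((Y :\: X) \subset Z)].

Definition exact_coloring c := forall i : 'I_k, exists A, c A = i.

Definition rainbow_B2 c (W1 W2 W3 W4 : {set T}) :=
  [/\ [/\ W1 \proper W2, W1 \proper W3, W2 \proper W4 & W3 \proper W4],
      ~~ (W2 \subset W3) && ~~ (W3 \subset W2) &
      uniq [:: c W1; c W2; c W3; c W4]].

Definition no_rainbow_B2 c := forall W1 W2 W3 W4, ~ rainbow_B2 c W1 W2 W3 W4.

Definition mono c F := forall A B, A \in F -> B \in F -> c A = c B.
Definition distinct_col c F G := forall A B, A \in F -> B \in G -> c A <> c B.

Definition mono_distinct4 c F1 F2 F3 F4 :=
  [/\ mono c F1, mono c F2, mono c F3, mono c F4 &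
   [/\ distinct_col c F1 F2, distinct_col c F1 F3, distinct_col c F1 F4,
       distinct_col c F2 F3 & distinct_col c F2 F4 /\ distinct_col c F3 F4]].

Definition has_color_of c Z F := exists2 A, A \in F & c Z = c A.

Definition type23_params X0 Y0 :=
  [/\ set0 \proper X0, X0 \proper Y0, Y0 \proper setT & #|X0| + 2 <= #|Y0|].

Definition Type2 c := exists X0 Y0, type23_params X0 Y0 /\
  let F1 := Bcc set0 Y0 :\: Bcc X0 Y0 in
  let F4 := Bcc X0 setT :\: Bcc X0 Y0 in
  mono_distinct4 c F1 [set X0; Y0] (Boo X0 Y0) F4 /\
  forall Z, Z \notin Bcc set0 Y0 :|: Bcc X0 setT ->
    has_color_of c Z F1 \/ has_color_of c Z F4.

Definition Type3_1 c := exists X0 Y0, type23_params X0 Y0 /\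
  let F1 := Bcc set0 Y0 :\: Bcc X0 Y0 in
  let F2 := X0 |: (Bup X0 Y0 :\: Boc X0 Y0) in
  mono_distinct4 c F1 F2 (Boo X0 Y0) [set Y0] /\
  forall Z, Z \notin Bcc set0 Y0 :|: Bup X0 Y0 ->
    has_color_of c Z F1 \/ has_color_of c Z F2.

Definition Type3_2 c := exists X0 Y0, type23_params X0 Y0 /\
  let F1 := Bcc X0 setT :\: Bcc X0 Y0 in
  let F2 := Y0 |: (Bdown X0 Y0 :\: Bco X0 Y0) in
  mono_distinct4 c F1 F2 (Boo X0 Y0) [set X0] /\
  forall Z, Z \notin Bcc X0 setT :|: Bdown X0 Y0 ->
    has_color_of c Z F1 \/ has_color_of c Z F2.

Definition Type4_1 c := exists X0 (Y0 : {set {set T}}),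
  [/\ 1 <= #|X0|, #|X0| <= #|T| - 2, Y0 != set0 & Y0 \subset Boc X0 setT] /\
  let F1 := \bigcup_(Y in Y0) (Bco set0 Y :\: Bco X0 Y) in
  let F3 := Boc X0 setT :\: Y0 in
  mono_distinct4 c F1 [set X0] F3 Y0 /\
  forall Z, Z \notin Bcc X0 setT :|: \bigcup_(Y in Y0) Bco set0 Y ->
    has_color_of c Z F1 \/ has_color_of c Z F3.

Definition Type4_2 c := exists Y0 (X0 : {set {set T}}),
  [/\ 2 <= #|Y0|, #|Y0| <= #|T| - 1, X0 != set0 & X0 \subset Boo set0 Y0] /\
  let F1 := \bigcup_(X in X0) (Boc X setT :\: Boc X Y0) in
  let F3 := Bco set0 Y0 :\: X0 in
  mono_distinct4 c F1 [set Y0] F3 X0 /\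
  forall Z, Z \notin Bcc set0 Y0 :|: \bigcup_(X in X0) Boc X setT ->
    has_color_of c Z F1 \/ has_color_of c Z F3.

End Defs.

(* Write al and be for the colors of the empty set and of [n], ga and de for the two others.
   A coloring without rainbow B_2 is rigid: a ga-set and a de-set are always comparable
   (otherwise they form a rainbow copy with the empty set and [n]), and inside an open interval
   a color spreads along incomparable pairs, since the incomparability graph of the interval is
   connected.  If ga and de both occur twice, the ga- and de-sets of minimal and maximal size
   have the same color and bound an interval carrying the other one, which forces Type 2.  If,
   say, ga occurs on a single set s, all de-sets lie on one side of s; complementation, which
   exchanges the empty set with [n], reverses inclusion and exchanges Types 3-1/3-2 and
   4-1/4-2, reduces to the case where they lie above s, and the position of the al-sets above s
   then gives Type 4-1, 4-2 or 3-2.  Conversely, a rainbow copy uses all four colors, and in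
   each Type the color classes of X0 and of the sets strictly between X0 and Y0 (resp. of Y0)
   leave no room for it. *)

From mathcomp Require Import all_boot zify.
Set Implicit Arguments. Unset Strict Implicit. Unset Printing Implicit Defensive.

Section SetFacts.
Variable T : finType.
Implicit Types A B X Y Z W d m M s : {set T}.

Definition incomparable A B := ~~ (A \subset B) && ~~ (B \subset A).

Lemma nsubset_witness A B x : x \in A -> x \notin B -> ~~ (A \subset B).
Proof. by move=> xA; apply: contra => /subsetP/(_ x xA). Qed.

Lemma incomparable_witness A B x y :
  x \in A -> x \notin B -> y \in B -> y \notin A -> incomparable A B.
Proof.
by move=> xA xB yB yA; rewrite /incomparable (nsubset_witness xA xB) (nsubset_witness yB yA).
Qed.

Lemma incomparableC A B : incomparable A B = incomparable B A.
Proof. by rewrite /incomparable andbC. Qed.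

Lemma subset_cases A B : [\/ A \subset B, B \subset A | incomparable A B].
Proof.
rewrite /incomparable; case: (boolP (A \subset B)) => _; first by constructor 1.
by case: (boolP (B \subset A)) => _; [constructor 2 | constructor 3].
Qed.

Lemma proper_witness A B x : A \subset B -> x \in B -> x \notin A -> A \proper B.
Proof. by move=> sAB xB xA; rewrite properE sAB (nsubset_witness xB xA). Qed.

Lemma proper_setU1 A x : x \notin A -> A \proper x |: A.
Proof. by move=> xA; rewrite properUr // sub1set. Qed.

Lemma setU1_incomparable m M Z1 Z2 x : m \proper Z1 -> Z1 \subset Z2 -> Z2 \subset M ->
  x \in M -> x \notin Z2 ->
  [/\ m \proper x |: m, x |: m \proper M, incomparable (x |: m) Z1 & incomparable (x |: m) Z2].
Proof.
move=> mZ1 sZ12 sZ2M xM xZ2.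
have [_ [y yZ1 ym]] := properP mZ1.
have xZ1 : x \notin Z1 by apply: contra xZ2; apply: (subsetP sZ12).
have xm : x \notin m by apply: contra xZ1; apply: (subsetP (proper_sub mZ1)).
have yZ2 : y \in Z2 := subsetP sZ12 y yZ1.
have yxm : y \notin x |: m by rewrite !inE negb_or ym andbT; apply: contraNneq xZ2 => <-.
split; first exact: proper_setU1.
- apply: (proper_witness _ (subsetP sZ2M y yZ2) yxm).
  by rewrite subUset sub1set xM (subset_trans (proper_sub mZ1)) // (subset_trans sZ12).
- exact: incomparable_witness (setU11 x m) xZ1 yZ1 yxm.
- exact: incomparable_witness (setU11 x m) xZ2 yZ2 yxm.
Qed.

Lemma setU1_diamond Z s W x : Z \proper s -> s \proper W ->
  x \in W -> x \notin s ->
  [/\ Z \proper x |: Z, x |: Z \proper W & incomparable s (x |: Z)].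
Proof.
move=> Zs sW xW xs; have [sZs [u us uZ]] := properP Zs.
have xZ : x \notin Z by apply: contra xs; apply: (subsetP sZs).
have uxZ : u \notin x |: Z by rewrite in_setU1 negb_or uZ andbT; apply: contraNneq xs => <-.
split; first exact: proper_setU1.
- apply: (proper_witness _ (subsetP (proper_sub sW) u us) uxZ).
  by rewrite subUset sub1set xW (subset_trans sZs (proper_sub sW)).
- exact: incomparable_witness us uxZ (setU11 x Z) xs.
Qed.

(* The incomparability graph on an open interval (m, M) is connected: every set
   comparable with [d] is incomparable with some [x |: m], itself incomparable with [d]. *)
Lemma open_interval_incomparable_ind (P : {set T} -> Prop) m M d :
  m \proper d -> d \proper M -> P d ->
  (forall Z W, m \proper Z -> Z \proper M -> m \proper W -> W \proper M ->
     P W -> incomparable Z W -> P Z) ->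
  forall Z, m \proper Z -> Z \proper M -> P Z.
Proof.
move=> md dM Pd step Z mZ ZM.
have step2 Z1 Z2 x : m \proper Z1 -> Z1 \subset Z2 -> Z2 \proper M -> x \in M -> x \notin Z2 ->
    (P Z1 -> P Z2) /\ (P Z2 -> P Z1).
  move=> mZ1 sZ12 Z2M xM xZ2.
  have mZ2 := proper_sub_trans mZ1 sZ12.
  have Z1M := sub_proper_trans sZ12 Z2M.
  have [mU UM iU1 iU2] := setU1_incomparable mZ1 sZ12 (proper_sub Z2M) xM xZ2.
  split=> [PZ1|PZ2]; apply: (step _ (x |: m)) => //; rewrite 1?incomparableC //.
    exact: (step _ Z1).
  exact: (step _ Z2).
case: (subset_cases Z d) => [sZd | sdZ | iZd]; last exact: (step Z d).
- have [_ [x xM xd]] := properP dM.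
  by apply: (step2 Z d x mZ sZd dM xM xd).2.
- have [_ [x xM xZ]] := properP ZM.
  by apply: (step2 d Z x md sdZ ZM xM xZ).1.
Qed.

Lemma exists_strictly_between A B : A \proper B -> #|A| + 2 <= #|B| ->
  exists Z, A \proper Z /\ Z \proper B.
Proof.
move=> AB cAB; have [sAB [x xB xA]] := properP AB.
exists (x |: A); split; first exact: proper_setU1.
by rewrite properEcard subUset sub1set xB sAB cardsU1 xA; lia.
Qed.

Lemma setD_nsubset X Y A B : X \subset B -> B \proper Y -> A \subset B -> ~~ (Y :\: X \subset A).
Proof.
move=> XB BY AB; apply/negP => YXA; have /(proper_sub_trans BY) : Y \subset B.
  apply/subsetP => y yY; case: (boolP (y \in X)) => yX; first exact: (subsetP XB).
  by apply/(subsetP AB)/(subsetP YXA); rewrite !inE yX.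
by rewrite properxx.
Qed.

Lemma unique_or_another (U : finType) (P : pred U) a :
  (forall x, P x -> x = a) \/ exists2 b, P b & b != a.
Proof.
case: (pickP [pred x | P x && (x != a)]) => [b /andP[Pb ba] | none]; first by right; exists b.
by left=> x Px; apply/eqP; have := none x; rewrite /= Px => /negbFE.
Qed.

End SetFacts.

Lemma ord4_cover (x1 x2 x3 x4 k : 'I_4) :
  uniq [:: x1; x2; x3; x4] -> [\/ k = x1, k = x2, k = x3 | k = x4].
Proof.
move=> U; have : k \in [:: x1; x2; x3; x4].
  apply: contraT => kx; have U5 : uniq [:: k; x1; x2; x3; x4] by rewrite cons_uniq kx U.
  by have := max_card (mem [:: k; x1; x2; x3; x4]); rewrite (card_uniqP U5) card_ord.
by rewrite !inE => /or4P[] /eqP->;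
  [constructor 1 | constructor 2 | constructor 3 | constructor 4].
Qed.

Lemma uniq4_swap12 (U : eqType) (a b g d : U) : uniq [:: a; b; g; d] -> uniq [:: b; a; g; d].
Proof. by rewrite (perm_uniq (permEl (perm_catCA [:: a] [:: b] [:: g; d]))). Qed.

Lemma uniq4_swap34 (U : eqType) (a b g d : U) : uniq [:: a; b; g; d] -> uniq [:: a; b; d; g].
Proof.
move=> abgd; rewrite -(@perm_uniq _ [:: a; b; g; d]) // !perm_cons.
exact: permEl (perm_catCA [:: g] [:: d] [::]).
Qed.

Section Rainbow.
Variables (T : finType) (c : {set T} -> 'I_4).
Implicit Types (A B Z W : {set T}) (F G : {set {set T}}).

Lemma color_proper A B : c A != c B -> A \subset B -> A \proper B.
Proof. by move=> cAB sAB; rewrite properEneq sAB andbT; apply: contraNneq cAB => ->. Qed.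

Lemma comparable_card_proper A B : c A != c B -> #|A| <= #|B| ->
  A \subset B \/ B \subset A -> A \proper B.
Proof.
move=> cAB AB [] sub; first exact: color_proper.
have BA : B \proper A by apply: color_proper sub; rewrite eq_sym.
by have := proper_card BA; rewrite ltnNge AB.
Qed.

Lemma proper0_color A : c A != c set0 -> set0 \proper A.
Proof. by rewrite eq_sym => cA; apply: color_proper cA (sub0set A). Qed.

Lemma properT_color A : c A != c setT -> A \proper setT.
Proof. by move=> cA; apply: color_proper cA (subsetT A). Qed.

Lemma rainbow_B2_swap W1 W2 W3 W4 : rainbow_B2 c W1 W2 W3 W4 -> rainbow_B2 c W1 W3 W2 W4.
Proof.
case=> [[h12 h13 h24 h34] /andP[i23 i32] u]; split => //; first by rewrite i23 i32.
by rewrite -(@perm_uniq _ [:: c W1; c W2; c W3; c W4]) // perm_cons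
  (permEl (perm_catCA [:: c W2] [:: c W3] [:: c W4])).
Qed.

Lemma rainbow_color_cover W1 W2 W3 W4 k : rainbow_B2 c W1 W2 W3 W4 ->
  [\/ c W1 = k, c W2 = k, c W3 = k | c W4 = k].
Proof.
case=> _ _ /(ord4_cover k) [] ->;
  by [constructor 1 | constructor 2 | constructor 3 | constructor 4].
Qed.

Lemma rainbow_above_color W1 W2 W3 W4 k : rainbow_B2 c W1 W2 W3 W4 ->
  (forall Z, W1 \subset Z -> c Z <> k) -> False.
Proof.
move=> rb noK; have [[h12 h13 h24 _] _ _] := rb.
have h14 := proper_sub (proper_trans h12 h24).
by case: (rainbow_color_cover k rb); apply: noK; rewrite // proper_sub.
Qed.

Lemma rainbow_below_color W1 W2 W3 W4 k : rainbow_B2 c W1 W2 W3 W4 ->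
  (forall Z, Z \subset W4 -> c Z <> k) -> False.
Proof.
move=> rb noK; have [[h12 _ h24 h34] _ _] := rb.
have h14 := proper_sub (proper_trans h12 h24).
by case: (rainbow_color_cover k rb); apply: noK; rewrite // proper_sub.
Qed.

Lemma mono_distinct4_of F1 F2 F3 F4 k1 k2 k3 k4 :
  {in F1, forall Z, c Z = k1} -> {in F2, forall Z, c Z = k2} ->
  {in F3, forall Z, c Z = k3} -> {in F4, forall Z, c Z = k4} ->
  uniq [:: k1; k2; k3; k4] -> mono_distinct4 c F1 F2 F3 F4.
Proof.
move=> h1 h2 h3 h4.
rewrite /= !inE !negb_or => /and4P[/and3P[n12 n13 n14] /andP[n23 n24] n34 _].
have mono_of F k : {in F, forall Z, c Z = k} -> mono c F by move=> h A B /h-> /h->.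
have dist_of F G k k' : {in F, forall Z, c Z = k} -> {in G, forall Z, c Z = k'} ->
    k != k' -> distinct_col c F G.
  by move=> h h' kk' A B /h-> /h'->; apply/eqP.
split; [exact: mono_of h1 | exact: mono_of h2 | exact: mono_of h3 | exact: mono_of h4 |].
split; [exact: dist_of h1 h2 n12 | exact: dist_of h1 h3 n13 | exact: dist_of h1 h4 n14 |
  exact: dist_of h2 h3 n23 |].
by split; [exact: dist_of h2 h4 n24 | exact: dist_of h3 h4 n34].
Qed.

End Rainbow.

Definition dual (T : finType) (c : {set T} -> 'I_4) Z := c (~: Z).

Section Dual.
Variables (T : finType) (c : {set T} -> 'I_4).

Lemma dualE Z : dual c Z = c (~: Z). Proof. by []. Qed.
Lemma dual_setC Z : dual c (~: Z) = c Z. Proof. by rewrite /dual setCK. Qed.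
Lemma dual_set0 : dual c set0 = c setT. Proof. by rewrite /dual setC0. Qed.
Lemma dual_setT : dual c setT = c set0. Proof. by rewrite /dual setCT. Qed.

End Dual.

Lemma no_rainbow_dual (T : finType) (c c' : {set T} -> 'I_4) :
  (forall Z, c' Z = c (~: Z)) -> no_rainbow_B2 c -> no_rainbow_B2 c'.
Proof.
move=> c'E NR W1 W2 W3 W4 [[p12 p13 p24 p34] inc u].
apply: (NR (~: W4) (~: W3) (~: W2) (~: W1)); split; first by rewrite !properC.
- by move: inc; rewrite !setCS andbC.
- by rewrite -rev_uniq; move: u; rewrite !c'E.
Qed.

(* The colorings of Type 4-1 with [n] outside Y0 are exactly the duals of those of Type 4-2. *)
Definition Type4_1s (T : finType) (c : {set T} -> 'I_4) :=
  exists (X0 : {set T}) (Y0 : {set {set T}}), setT \notin Y0 /\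
  ([/\ 1 <= #|X0|, #|X0| <= #|T| - 2, Y0 != set0 & Y0 \subset Boc X0 setT] /\
  let F1 := \bigcup_(Y in Y0) (Bco set0 Y :\: Bco X0 Y) in
  let F3 := Boc X0 setT :\: Y0 in
  mono_distinct4 c F1 [set X0] F3 Y0 /\
  forall Z, Z \notin Bcc X0 setT :|: \bigcup_(Y in Y0) Bco set0 Y ->
    has_color_of c Z F1 \/ has_color_of c Z F3).

Lemma type4_1s_type4_1 (T : finType) (c : {set T} -> 'I_4) : Type4_1s c -> Type4_1 c.
Proof. by case=> X0 [Y0 [_ H]]; exists X0, Y0. Qed.

Section TypeDuality.
Variables (T : finType) (c c' : {set T} -> 'I_4).
Hypothesis c'E : forall Z, c' Z = c (~: Z).
Implicit Types (X Y Z : {set T}) (F G R : {set {set T}}).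

Definition setC_corr F G := forall Z, (Z \in F) = (~: Z \in G).

Lemma setC_corrC F G : setC_corr F G -> setC_corr G F.
Proof. by move=> E Z; rewrite -[in LHS](setCK Z) E. Qed.

Lemma setC_corrU F G F' G' :
  setC_corr F F' -> setC_corr G G' -> setC_corr (F :|: G) (F' :|: G').
Proof. by move=> E1 E2 Z; rewrite !inE E1 E2. Qed.

Lemma setC_corrD F G F' G' :
  setC_corr F F' -> setC_corr G G' -> setC_corr (F :\: G) (F' :\: G').
Proof. by move=> E1 E2 Z; rewrite !inE E1 E2. Qed.

Lemma setC_corrU1 X F G : setC_corr F G -> setC_corr (X |: F) (~: X |: G).
Proof. by move=> E Z; rewrite !inE E (inj_eq (@setC_inj T)). Qed.

Lemma setC_corr1 X : setC_corr [set X] [set ~: X].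
Proof. by move=> Z; rewrite !inE (inj_eq (@setC_inj T)). Qed.

Lemma setC_corr_imset F : setC_corr (@setC T @: F) F.
Proof.
move=> Z; apply/imsetP/idP => [[X XF ->] | ZF]; first by rewrite setCK.
by exists (~: Z); rewrite ?setCK.
Qed.

Lemma setC_corr_bigcup I J (f g : {set T} -> {set {set T}}) : setC_corr I J ->
  (forall X, setC_corr (f X) (g (~: X))) ->
  setC_corr (\bigcup_(X in I) f X) (\bigcup_(Y in J) g Y).
Proof.
move=> EI E Z; apply/bigcupP/bigcupP => -[X XI ZX].
  by exists (~: X); rewrite -?EI -?E.
by exists (~: X); rewrite ?EI ?E setCK.
Qed.

Lemma setC_corr_Bcc X Y : setC_corr (Bcc X Y) (Bcc (~: Y) (~: X)).
Proof. by move=> Z; rewrite !inE !setCS andbC. Qed.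

Lemma setC_corr_Boo X Y : setC_corr (Boo X Y) (Boo (~: Y) (~: X)).
Proof. by move=> Z; rewrite !inE !properC andbC. Qed.

Lemma setC_corr_Boc X Y : setC_corr (Boc X Y) (Bco (~: Y) (~: X)).
Proof. by move=> Z; rewrite !inE properC setCS andbC. Qed.

Lemma setC_corr_Bco X Y : setC_corr (Bco X Y) (Boc (~: Y) (~: X)).
Proof. by move=> Z; rewrite !inE properC setCS andbC. Qed.

Lemma setC_corr_Bup X Y : setC_corr (Bup X Y) (Bdown (~: Y) (~: X)).
Proof.
move=> Z; rewrite !inE properC subsetT sub0set /= andbT; congr (_ && _).
by rewrite setI_eq0 disjoints_subset subsetC [~: X :\: ~: Y]setDE setCK setIC -setDE.
Qed.

Lemma mono_distinct4_dual F1 F2 F3 F4 G1 G2 G3 G4 :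
  setC_corr F1 G1 -> setC_corr F2 G2 -> setC_corr F3 G3 -> setC_corr F4 G4 ->
  mono_distinct4 c' G1 G2 G3 G4 -> mono_distinct4 c F1 F2 F3 F4.
Proof.
move=> E1 E2 E3 E4.
have mono_tr F G : setC_corr F G -> mono c' G -> mono c F.
  by move=> E m A B AF BF; have := m (~: A) (~: B); rewrite !c'E !setCK -!E; apply.
have dist_tr F G F' G' : setC_corr F F' -> setC_corr G G' ->
    distinct_col c' F' G' -> distinct_col c F G.
  by move=> E E' d A B AF BG; have := d (~: A) (~: B); rewrite !c'E !setCK -E -E'; apply.
case=> m1 m2 m3 m4 [d12 d13 d14 d23 [d24 d34]].
split; [exact: mono_tr m1 | exact: mono_tr m2 | exact: mono_tr m3 | exact: mono_tr m4 |].
split; [exact: dist_tr d12 | exact: dist_tr d13 | exact: dist_tr d14 | exact: dist_tr d23 |].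
by split; [exact: dist_tr d24 | exact: dist_tr d34].
Qed.

Lemma rest_colors_dual R F1 F2 RG G1 G2 :
  setC_corr R RG -> setC_corr F1 G1 -> setC_corr F2 G2 ->
  (forall Z, Z \notin RG -> has_color_of c' Z G1 \/ has_color_of c' Z G2) ->
  forall Z, Z \notin R -> has_color_of c Z F1 \/ has_color_of c Z F2.
Proof.
move=> E E1 E2 H Z; rewrite E => /H.
have hc_tr F G : setC_corr F G -> has_color_of c' (~: Z) G -> has_color_of c Z F.
  by move=> EF [A AG e]; exists (~: A); [rewrite EF setCK | move: e; rewrite !c'E setCK].
by case=> h; [left | right]; exact: hc_tr h.
Qed.

Lemma type23_params_setC X0 Y0 : type23_params X0 Y0 -> type23_params (~: Y0) (~: X0).
Proof.
case=> p0 pXY pT pcard; split.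
- by rewrite -setCT properC.
- by rewrite properC.
- by rewrite -setC0 properC.
- by have := cardsC X0; have := cardsC Y0; lia.
Qed.

Lemma setC_corr_type3 X Y :
  [/\ setC_corr (Bcc set0 Y :\: Bcc X Y) (Bcc (~: Y) setT :\: Bcc (~: Y) (~: X)),
      setC_corr (X |: (Bup X Y :\: Boc X Y))
                (~: X |: (Bdown (~: Y) (~: X) :\: Bco (~: Y) (~: X))),
      setC_corr (Boo X Y) (Boo (~: Y) (~: X)),
      setC_corr [set Y] [set ~: Y] &
      setC_corr (Bcc set0 Y :|: Bup X Y) (Bcc (~: Y) setT :|: Bdown (~: Y) (~: X))].
Proof.
have E0 := setC_corr_Bcc set0 Y; rewrite setC0 in E0.
split; [exact: setC_corrD E0 (setC_corr_Bcc X Y) | | exact: setC_corr_Boo | exact: setC_corr1 |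
  exact: setC_corrU E0 (setC_corr_Bup X Y)].
exact: setC_corrU1 (setC_corrD (setC_corr_Bup X Y) (setC_corr_Boc X Y)).
Qed.

Lemma type3_1_of_dual : Type3_2 c' -> Type3_1 c.
Proof.
case=> X0 [Y0 [params [md rest]]]; exists (~: Y0), (~: X0).
split; first exact: type23_params_setC.
have [E1 E2 E3 E4 ER] := setC_corr_type3 (~: Y0) (~: X0); rewrite !setCK in E1 E2 E3 E4 ER.
split; [exact: mono_distinct4_dual md | exact: rest_colors_dual rest].
Qed.

Lemma type3_2_of_dual : Type3_1 c' -> Type3_2 c.
Proof.
case=> X0 [Y0 [params [md rest]]]; exists (~: Y0), (~: X0).
split; first exact: type23_params_setC.
have [E1 E2 E3 E4 ER] := setC_corr_type3 X0 Y0.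
split; [apply: (mono_distinct4_dual _ _ _ _ md) | apply: (rest_colors_dual _ _ _ rest)];
  exact: setC_corrC.
Qed.

Lemma setC_corr_type4 Y0 XX YY : setC_corr XX YY ->
  [/\ setC_corr (\bigcup_(X in XX) (Boc X setT :\: Boc X Y0))
                (\bigcup_(Y in YY) (Bco set0 Y :\: Bco (~: Y0) Y)),
      setC_corr [set Y0] [set ~: Y0],
      setC_corr (Bco set0 Y0 :\: XX) (Boc (~: Y0) setT :\: YY),
      setC_corr XX YY &
      setC_corr (Bcc set0 Y0 :|: \bigcup_(X in XX) Boc X setT)
                (Bcc (~: Y0) setT :|: \bigcup_(Y in YY) Bco set0 Y)].
Proof.
move=> E; have top X := setC_corr_Boc X setT; rewrite setCT in top.
have E0 := setC_corr_Bco set0 Y0; rewrite setC0 in E0.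
have E0' := setC_corr_Bcc set0 Y0; rewrite setC0 in E0'.
split; [ | exact: setC_corr1 | exact: setC_corrD E0 E | exact: E | ].
- by apply: setC_corr_bigcup E _ => X; apply: setC_corrD (top X) (setC_corr_Boc X Y0).
- exact: setC_corrU E0' (setC_corr_bigcup E top).
Qed.

Lemma type4_1_of_dual : Type4_2 c' -> Type4_1 c.
Proof.
case=> Y0 [XX [[p1 p2 p3 p4] [md rest]]]; exists (~: Y0), (@setC T @: XX); split.
  split; [by have := cardsC Y0; lia | by have := cardsC Y0; lia | |].
  - by case/set0Pn: p3 => X XXX; apply/set0Pn; exists (~: X); apply: imset_f.
  - apply/subsetP => _ /imsetP[X XXX ->]; move/subsetP/(_ X XXX): p4.
    by rewrite !inE properC subsetT andbT => /andP[].
have [E1 E2 E3 E4 ER] := setC_corr_type4 Y0 (setC_corrC (setC_corr_imset XX)).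
split; [apply: (mono_distinct4_dual _ _ _ _ md) | apply: (rest_colors_dual _ _ _ rest)];
  exact: setC_corrC.
Qed.

Lemma type4_2_of_dual : Type4_1s c' -> Type4_2 c.
Proof.
case=> X0 [YY [TY [[p1 p2 p3 p4] [md rest]]]]; exists (~: X0), (@setC T @: YY); split.
  split; try by have := cardsC X0; lia.
  - by case/set0Pn: p3 => Y YYY; apply/set0Pn; exists (~: Y); apply: imset_f.
  - apply/subsetP => _ /imsetP[Y YYY ->]; move/subsetP/(_ Y YYY): p4.
    rewrite !inE subsetT andbT properC => ->; rewrite andbT -setCT properC properT.
    by apply: contraNneq TY => <-.
have [E1 E2 E3 E4 ER] := setC_corr_type4 (~: X0) (setC_corr_imset YY).
rewrite setCK in E1 E2 E3 ER.
split; [exact: mono_distinct4_dual md | exact: rest_colors_dual rest].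
Qed.

End TypeDuality.

(* Side conditions on colors: the hypotheses [c A = k] are rewritten, and two of the four
   colors are told apart using the hypothesis [uniq [:: al; be; ga; de]] in the context. *)
Ltac rewrite_colors :=
  repeat match goal with H : ?f ?A = ?k |- context [?f ?A] => is_var f; is_var k; rewrite H end.
Ltac neq_colors := rewrite_colors;
  match goal with H : is_true (uniq [:: _; _; _; _]) |- _ =>
    apply: (contraTneq _ H) => ->; by rewrite /= !inE eqxx ?orbT ?andbF end.
Ltac distinct_colors :=
  rewrite_colors; rewrite /= !inE !negb_or /=;
  repeat (apply/andP; split); first [done | neq_colors].
Ltac color_bounds := try
  match goal with H0 : ?f set0 = _, HT : ?f setT = _ |- _ =>
    first [ apply: (proper0_color (c := f)); neq_colors
          | apply: (properT_color (c := f)); neq_colors ] end.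

Section NoRainbowBasics.
#[local] Set Default Proof Using "All".
Variables (T : finType) (c : {set T} -> 'I_4).
Hypothesis NR : no_rainbow_B2 c.
Variables al be ga de : 'I_4.
Hypotheses (Hal : c set0 = al) (Hbe : c setT = be) (Hcol : uniq [:: al; be; ga; de]).
Implicit Types A B Z W V Y d m M s P Q R U : {set T}.

Lemma color_cases x : [\/ x = al, x = be, x = ga | x = de].
Proof. exact: ord4_cover. Qed.

Lemma rainbow_absurd W1 W2 W3 W4 : W1 \proper W2 -> W1 \proper W3 -> W2 \proper W4 ->
  W3 \proper W4 -> incomparable W2 W3 -> uniq [:: c W1; c W2; c W3; c W4] -> False.
Proof.
by move=> h12 h13 h24 h34 inc u; apply: (NR (W1 := W1) (W2 := W2) (W3 := W3) (W4 := W4)).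
Qed.

Lemma ga_de_not_incomparable A B : c A = ga -> c B = de -> incomparable A B -> False.
Proof.
move=> cA cB iAB.
by apply: (rainbow_absurd (W1 := set0) (W4 := setT) _ _ _ _ iAB); color_bounds; distinct_colors.
Qed.

Lemma ga_de_comparable A B : c A = ga -> c B = de -> A \subset B \/ B \subset A.
Proof.
move=> cA cB; case: (subset_cases A B) => [|| iAB]; [by left | by right |].
by case: (ga_de_not_incomparable cA cB iAB).
Qed.

Lemma ga_pair_below_de_pair_nsub A A' B B' :
  c A = ga -> c A' = ga -> c B = de -> c B' = de ->
  A \proper B -> A \proper B' -> A' \proper B -> A' \proper B' ->
  ~~ (A' \subset A) -> ~~ (B \subset B') -> False.
Proof.
move=> cA cA' cB cB' AB AB' A'B A'B' /subsetPn[p pA' pA] /subsetPn[q qB qB'].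
have qA : q \notin A by apply: contra qB'; apply: (subsetP (proper_sub AB')).
have pq : p != q by apply: contraNneq qB' => <-; apply: (subsetP (proper_sub A'B')).
have pV : p \notin q |: A by rewrite in_setU1 negb_or pq.
have iVA' : incomparable (q |: A) A'.
  apply: (incomparable_witness (setU11 q A) _ pA' pV).
  by apply: contra qB'; apply: (subsetP (proper_sub A'B')).
have iVB' : incomparable (q |: A) B'.
  exact: incomparable_witness (setU11 q A) qB' (subsetP (proper_sub A'B') p pA') pV.
have AV : A \proper q |: A := proper_setU1 qA.
have VB : q |: A \proper B.
  apply: (proper_witness _ (subsetP (proper_sub A'B) p pA') pV).
  by rewrite subUset sub1set qB proper_sub.
case: (color_cases (c (q |: A))) => cV.
- by apply: (rainbow_absurd (W4 := setT) AV AB' _ _ iVB'); color_bounds; distinct_colors.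
- apply: (rainbow_absurd (W1 := set0) _ _ A'B VB); rewrite 1?incomparableC //;
    color_bounds; distinct_colors.
- exact: ga_de_not_incomparable cV cB' iVB'.
- by apply: (ga_de_not_incomparable cA' cV); rewrite incomparableC.
Qed.

Lemma ga_pair_below_de_pair A A' B B' :
  c A = ga -> c A' = ga -> c B = de -> c B' = de ->
  A \proper B -> A \proper B' -> A' \proper B -> A' \proper B' -> A != A' -> B != B' -> False.
Proof.
move=> cA cA' cB cB' AB AB' A'B A'B'; rewrite !eqEsubset !negb_and.
case/orP=> nA; case/orP=> nB.
- exact: (ga_pair_below_de_pair_nsub cA' cA cB cB' A'B A'B' AB AB' nA nB).
- exact: (ga_pair_below_de_pair_nsub cA' cA cB' cB A'B' A'B AB' AB nA nB).
- exact: (ga_pair_below_de_pair_nsub cA cA' cB cB' AB AB' A'B A'B' nA nB).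
- exact: (ga_pair_below_de_pair_nsub cA cA' cB' cB AB' AB A'B' A'B nA nB).
Qed.

Lemma sandwiched_color P Q R U : c P = ga -> c Q = de -> c R = ga ->
  P \proper Q -> Q \proper R -> P \proper U -> U \proper R -> incomparable U Q -> c U = de.
Proof.
move=> cP cQ cR PQ QR PU UR iUQ.
have RT : R \proper setT by color_bounds.
case: (color_cases (c U)) => cU //; exfalso.
- apply: (rainbow_absurd (W4 := setT) PQ PU); rewrite 1?incomparableC ?(proper_trans _ RT) //.
  distinct_colors.
- by apply: (rainbow_absurd (W1 := set0) _ _ QR UR); rewrite 1?incomparableC //;
    color_bounds; distinct_colors.
- exact: ga_de_not_incomparable cU cQ iUQ.
Qed.

Section Type2LowerColor.
Variables (m M : {set T}) (x y : T).
Hypotheses (cm : c m = ga) (cM : c M = ga) (mM : m \proper M).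
Hypothesis Gc : forall Z, c Z = ga -> Z = m \/ Z = M.
Hypothesis Iv : forall Z, m \proper Z -> Z \proper M -> c Z = de.
Hypothesis Dc : forall Z, c Z = de -> m \subset Z.
Hypotheses (xy : x != y) (xM : x \in M) (xm : x \notin m) (yM : y \in M) (ym : y \notin m).

Lemma type2_lower_other_point z : exists w, [/\ w \in M, w \notin m & w != z].
Proof. by case: (eqVneq x z) => [<-|]; [exists y; rewrite eq_sym | exists x]. Qed.

Lemma type2_lower_setU1 z w : z \in M -> z \notin m -> w \in M -> w \notin m -> w != z ->
  z |: m \proper M /\ c (z |: m) = de.
Proof.
move=> zM zm wM wm wz.
have zmM : z |: m \proper M.
  apply: (proper_witness _ wM); first by rewrite subUset sub1set zM proper_sub.
  by rewrite in_setU1 negb_or wz.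
by split=> //; apply: Iv (proper_setU1 zm) zmM.
Qed.

Lemma type2_lower_off_ga_de Z : ~~ (m \subset Z) -> c Z <> ga /\ c Z <> de.
Proof.
move=> mZ; split=> cZ; last by rewrite Dc in mZ.
by case: (Gc cZ) => E; rewrite E ?subxx ?proper_sub in mZ.
Qed.

Lemma type2_lower_incomparable_al Z : Z \subset M -> ~~ (m \subset Z) -> ~~ (Z \subset m) ->
  c Z = al.
Proof.
move=> ZM mZ /subsetPn[w wZ wm]; have [u um uZ] := subsetPn mZ.
have [v [vM vm vw]] := type2_lower_other_point w.
have wv : w != v by rewrite eq_sym.
have [vmM cv] := type2_lower_setU1 vM vm (subsetP ZM w wZ) wm wv.
have ZM' : Z \proper M.
  by rewrite properE ZM; apply: contra mZ => /(subset_trans (proper_sub mM)).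
have [ncg ncd] := type2_lower_off_ga_de mZ.
case: (color_cases (c Z)) => // cZ; exfalso.
apply: (rainbow_absurd (W1 := set0) _ _ ZM' vmM); color_bounds; last by distinct_colors.
by apply: (incomparable_witness wZ _ (setU1r v um) uZ); rewrite in_setU1 negb_or wv.
Qed.

Lemma type2_lower_color Z : Z \subset M -> ~~ (m \subset Z) -> c Z = al.
Proof.
move=> ZM mZ; case: (boolP (Z \subset m)) => Zm; last exact: type2_lower_incomparable_al.
have [ncg ncd] := type2_lower_off_ga_de mZ.
case: (color_cases (c Z)) => // cZ; exfalso.
have Zm' : Z \proper m by rewrite properE Zm.
have [v [vM vm vx]] := type2_lower_other_point x.
have [xmM cxm] := type2_lower_setU1 xM xm vM vm vx.
have [ZxZ xZxm /andP[nsub1 nsub2]] := setU1_diamond Zm' (proper_setU1 xm) (setU11 x m) xm.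
have cxZ : c (x |: Z) = al.
  apply: (type2_lower_incomparable_al _ nsub1 nsub2).
  by rewrite subUset sub1set xM (subset_trans Zm (proper_sub mM)).
apply: (rainbow_absurd ZxZ Zm' xZxm (proper_setU1 xm)); last by distinct_colors.
by rewrite /incomparable nsub1 nsub2.
Qed.

End Type2LowerColor.

Lemma al_de_above_ga_comparable s U V : c s = ga -> c U = al -> c V = de ->
  s \proper U -> s \proper V -> U \subset V \/ V \subset U.
Proof.
move=> cs cU cV sU sV; case: (subset_cases U V) => [|| iUV]; [by left | by right | exfalso].
by apply: (rainbow_absurd sU sV _ _ iUV); color_bounds; distinct_colors.
Qed.

Lemma de_on_both_sides_absurd s B B' : c s = ga -> (forall Z, c Z = ga -> Z = s) ->
  c B = de -> c B' = de -> B \proper s -> s \proper B' -> False.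
Proof.
move=> cs Gs cB cB' Bs sB'; have [_ [x xB' xs]] := properP sB'.
have [BU UB' isU] := setU1_diamond Bs sB' xB' xs.
case: (color_cases (c (x |: B))) => cU.
- by apply: (rainbow_absurd Bs BU _ _ isU); color_bounds; distinct_colors.
- by apply: (rainbow_absurd (W1 := set0) _ _ sB' UB' isU); color_bounds; distinct_colors.
- by move: isU; rewrite (Gs _ cU) /incomparable subxx.
- exact: ga_de_not_incomparable cs cU isU.
Qed.

Section UniqueGa.
Variable s : {set T}.
Hypotheses (cs : c s = ga) (Gs : forall Z, c Z = ga -> Z = s).
Hypothesis Dab : forall Z, c Z = de -> s \proper Z.

Lemma ga_unique_off_ga_de Z : ~~ (s \subset Z) -> c Z <> ga /\ c Z <> de.
Proof.
move=> sZ; split=> cZ; first by rewrite (Gs cZ) subxx in sZ.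
by rewrite (proper_sub (Dab cZ)) in sZ.
Qed.

Lemma below_de_off_ga_al Y Z : c Y = de -> Z \proper Y -> ~~ (s \subset Z) -> c Z = al.
Proof.
move=> cY ZY sZ; have sY := Dab cY.
have incomparable_al W : W \proper Y -> ~~ (s \subset W) -> ~~ (W \subset s) -> c W = al.
  move=> WY sW Ws; have [ncg ncd] := ga_unique_off_ga_de sW.
  case: (color_cases (c W)) => // cW; exfalso.
  apply: (rainbow_absurd (W1 := set0) _ _ sY WY); color_bounds; last by distinct_colors.
  by rewrite /incomparable sW Ws.
case: (boolP (Z \subset s)) => Zs; last exact: incomparable_al.
have [ncg ncd] := ga_unique_off_ga_de sZ.
case: (color_cases (c Z)) => // cZ; exfalso.
have Zs' : Z \proper s by rewrite properE Zs.
have [_ [x xY xs]] := properP sY.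
have [ZxZ xZY isxZ] := setU1_diamond Zs' sY xY xs.
have [nsub1 nsub2] := andP isxZ.
have cxZ := incomparable_al _ xZY nsub1 nsub2.
by apply: (rainbow_absurd Zs' ZxZ sY xZY isxZ); distinct_colors.
Qed.

Lemma interval_ga_de_al Y d : c Y = al -> c d = de -> s \proper Y -> Y \proper d ->
  forall Z, s \proper Z -> Z \proper d -> c Z = al.
Proof.
move=> cY cd sY Yd; have dT : d \proper setT by color_bounds.
apply: (open_interval_incomparable_ind sY Yd cY) => Z W sZ Zd sW Wd cW iZW.
case: (color_cases (c Z)) => // cZ; exfalso.
- by apply: (rainbow_absurd sZ sW Zd Wd iZW); distinct_colors.
- by rewrite (Gs cZ) properxx in sZ.
- apply: (rainbow_absurd sW sZ (proper_trans Wd dT) (proper_trans Zd dT));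
    rewrite 1?incomparableC //; distinct_colors.
Qed.

Lemma de_unique_above_al Y d : c Y = al -> c d = de -> s \proper Y -> Y \proper d ->
  forall d', c d' = de -> d' = d.
Proof.
move=> cY cd sY Yd d' cd'; apply/eqP; apply: contraT => nd'.
have sd' := Dab cd'.
have not_below_d : ~~ (d' \subset d).
  apply/negP => d'd; have : c d' != al by neq_colors.
  have d'd' : d' \proper d by rewrite properEneq d'd nd'.
  by rewrite (interval_ga_de_al cY cd sY Yd sd' d'd') eqxx.
have setU1_al z : z \in d -> z \notin s -> c (z |: s) = al.
  move=> zd zs; apply: (interval_ga_de_al cY cd sY Yd (proper_setU1 zs)).
  rewrite properEcard subUset sub1set zd (proper_sub (proper_trans sY Yd)) cardsU1 zs.
  by have := proper_card sY; have := proper_card Yd; lia.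
have dd' : d \proper d'.
  rewrite properEneq eq_sym nd'; apply/subsetP => z zd.
  case: (boolP (z \in s)) => zs; first exact: (subsetP (proper_sub sd')).
  case: (al_de_above_ga_comparable cs (setU1_al z zd zs) cd' (proper_setU1 zs) sd') => sub.
    exact: (subsetP sub z (setU11 z s)).
  have zsd : z |: s \subset d by rewrite subUset sub1set zd (proper_sub (proper_trans sY Yd)).
  by rewrite (subset_trans sub zsd) in not_below_d.
have : c d != al by neq_colors.
by rewrite (interval_ga_de_al cY cd' sY (proper_trans Yd dd') (proper_trans sY Yd) dd') eqxx.
Qed.

Lemma below_de_not_be Y d : c Y = al -> c d = de -> s \proper Y -> Y \proper d ->
  forall Z, Z \proper d -> c Z != be.
Proof.
move=> cY cd sY Yd Z Zd.
case: (boolP (s \subset Z)) => sZ; last by rewrite (below_de_off_ga_al cd Zd sZ); neq_colors.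
case: (eqVneq s Z) => [<-|ne]; first by neq_colors.
have sZ' : s \proper Z by rewrite properEneq ne.
by rewrite (interval_ga_de_al cY cd sY Yd sZ' Zd); neq_colors.
Qed.

Lemma type4_1s_of_no_al_above d : c d = de -> (forall Z, s \proper Z -> c Z <> al) -> Type4_1s c.
Proof.
move=> cd noal; have sd := Dab cd.
have dT : d \proper setT by color_bounds.
have s0 : set0 \proper s by color_bounds.
exists s, [set Z | c Z == de]; split; first by rewrite inE Hbe; neq_colors.
split.
  split.
  - by rewrite card_gt0 -proper0.
  - by have := proper_card sd; have := proper_card dT; rewrite cardsT; lia.
  - by apply/set0Pn; exists d; rewrite inE cd.
  - by apply/subsetP => Z; rewrite !inE subsetT andbT => /eqP /Dab.
split.
  apply: (mono_distinct4_of (k1 := al) (k2 := ga) (k3 := be) (k4 := de)).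
  - move=> Z /bigcupP[Y]; rewrite inE => /eqP cY; rewrite !inE sub0set /= => /andP[sZ ZY].
    by apply: (below_de_off_ga_al cY ZY); move: sZ; rewrite ZY andbT.
  - by move=> Z; rewrite inE => /eqP->.
  - move=> Z; rewrite !inE subsetT andbT => /andP[cZ sZ].
    case: (color_cases (c Z)) => cZ' //; exfalso.
    + exact: (noal Z sZ cZ').
    + by rewrite (Gs cZ') properxx in sZ.
    + by rewrite cZ' eqxx in cZ.
  - by move=> Z; rewrite inE => /eqP.
  - distinct_colors.
move=> Z; rewrite !inE negb_or subsetT andbT => /andP[sZ _].
have [ncg ncd] := ga_unique_off_ga_de sZ.
case: (color_cases (c Z)) => cZ; [left; exists set0 | right; exists setT | by [] | by []].
- apply/bigcupP; exists d; first by rewrite inE cd.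
  by rewrite !inE sub0set (proper_trans s0 sd) subset0 !andbT -proper0 s0.
- by rewrite cZ Hal.
- by rewrite !inE Hbe (proper_trans sd dT) subxx !andbT; neq_colors.
- by rewrite cZ Hbe.
Qed.

Section Type3_2Construction.
Variables Y d : {set T}.
Hypotheses (cY : c Y = al) (sY : s \proper Y) (cd : c d = de).
Hypothesis AllD : forall Y' d', c Y' = al -> s \proper Y' -> c d' = de -> d' \proper Y'.

Lemma type3_2_interval_de : forall Z, s \proper Z -> Z \proper Y -> c Z = de.
Proof.
have YT : Y \proper setT by color_bounds.
apply: (open_interval_incomparable_ind (Dab cd) (AllD cY sY cd) cd) => Z W sZ ZY sW WY cW iZW.
case: (color_cases (c Z)) => // cZ; exfalso.
- apply: (rainbow_absurd sZ sW (proper_trans ZY YT) (proper_trans WY YT) iZW); distinct_colors.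
- by apply: (rainbow_absurd sZ sW ZY WY iZW); distinct_colors.
- by rewrite (Gs cZ) properxx in sZ.
Qed.

Lemma type3_2_upper_be Z : s \subset Z -> ~~ (Z \subset Y) -> c Z = be.
Proof.
move=> sZ ZY.
have sZp : s \proper Z.
  by rewrite properE sZ; apply: contra ZY => Zs; exact: subset_trans Zs (proper_sub sY).
have [z zZ zY] := subsetPn ZY.
have zs : z \notin s by apply: contra zY; apply: (subsetP (proper_sub sY)).
case: (color_cases (c Z)) => // cZ; exfalso.
- have dZ := AllD cZ sZp cd.
  have [_ [a ad as_]] := properP (Dab cd).
  have zd : z \notin d by apply: contra zY; apply: (subsetP (proper_sub (AllD cY sY cd))).
  have aV : a \notin z |: s by rewrite in_setU1 negb_or as_ andbT; apply: contraNneq zd => <-.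
  have VZ : z |: s \proper Z.
    by apply: (proper_witness _ (subsetP (proper_sub dZ) a ad) aV); rewrite subUset sub1set zZ sZ.
  have cV : c (z |: s) = be.
    case: (color_cases (c (z |: s))) => // cV; exfalso.
    + by move: aV; rewrite (subsetP (proper_sub (AllD cV (proper_setU1 zs) cd)) a ad).
    + by move: zs; rewrite -(Gs cV) setU11.
    + by move: zY; rewrite (subsetP (proper_sub (AllD cY sY cV)) z (setU11 z s)).
  apply: (rainbow_absurd (proper_setU1 zs) (Dab cd) VZ dZ); last by distinct_colors.
  exact: incomparable_witness (setU11 z s) zd ad aV.
- by rewrite (Gs cZ) properxx in sZp.
- by move: ZY; rewrite (proper_sub (AllD cY sY cZ)).
Qed.

Lemma type3_2_lower_al Z : Z \proper Y -> ~~ (Y :\: s \subset Z) -> ~~ (s \subset Z) -> c Z = al.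
Proof.
move=> ZY YsZ sZ.
have incomparable_al W : W \proper Y -> ~~ (Y :\: s \subset W) -> ~~ (s \subset W) ->
    ~~ (W \subset s) -> c W = al.
  move=> WY YsW sW Ws; have [ncg ncd] := ga_unique_off_ga_de sW.
  case: (color_cases (c W)) => // cW; exfalso.
  have [y /setDP[yY ys] yW] := subsetPn YsW.
  have UY : W :|: s \proper Y.
    apply: (proper_witness _ yY); first by rewrite subUset !proper_sub.
    by rewrite in_setU negb_or yW.
  have sU : s \proper W :|: s by rewrite properUr.
  have WU : W \proper W :|: s by rewrite properUl.
  have cU := type3_2_interval_de sU UY.
  apply: (rainbow_absurd (W1 := set0) _ _ WU sU); color_bounds; last by distinct_colors.
  by rewrite /incomparable Ws sW.
case: (boolP (Z \subset s)) => Zs; last exact: incomparable_al.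
have [ncg ncd] := ga_unique_off_ga_de sZ.
case: (color_cases (c Z)) => // cZ; exfalso.
have [y /setDP[yY ys] yZ] := subsetPn YsZ.
have [y' [y'Y y's y'y]] : exists y', [/\ y' \in Y, y' \notin s & y' != y].
  have dY := AllD cY sY cd.
  have [_ [a ad as_]] := properP (Dab cd); have [_ [b bY bd]] := properP dY.
  have bs : b \notin s by apply: contra bd; apply: (subsetP (proper_sub (Dab cd))).
  case: (eqVneq a y) => [ay | ay]; last by exists a; rewrite (subsetP (proper_sub dY)).
  by exists b; split=> //; apply: contraNneq bd => ->; rewrite -ay.
have Zs' : Z \proper s by rewrite properE Zs.
have ysY : y |: s \proper Y.
  apply: (proper_witness _ y'Y); first by rewrite subUset sub1set yY proper_sub.
  by rewrite in_setU1 negb_or y'y.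
have [ZyZ yZys isyZ] := setU1_diamond Zs' (proper_setU1 ys) (setU11 y s) ys.
have [nsub1 nsub2] := andP isyZ.
have cyZ : c (y |: Z) = al.
  apply: (incomparable_al (y |: Z) (proper_trans yZys ysY) _ nsub1 nsub2).
  apply: (nsubset_witness (x := y')); first by rewrite !inE y's.
  by rewrite in_setU1 negb_or y'y; apply: contra y's; apply: (subsetP Zs).
have cys := type3_2_interval_de (proper_setU1 ys) ysY.
by apply: (rainbow_absurd Zs' ZyZ (proper_setU1 ys) yZys isyZ); distinct_colors.
Qed.

End Type3_2Construction.

Lemma type3_2_of_al_above Y d : c Y = al -> s \proper Y -> c d = de ->
  (forall Y' d', c Y' = al -> s \proper Y' -> c d' = de -> d' \proper Y') -> Type3_2 c.
Proof.
move=> cY sY cd AllD; have dY := AllD _ _ cY sY cd; have sd := Dab cd.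
have YT : Y \proper setT by color_bounds.
exists s, Y; split.
  split => //; first by color_bounds.
  by rewrite addn2; exact: leq_ltn_trans (proper_card sd) (proper_card dY).
split.
  apply: (mono_distinct4_of (k1 := be) (k2 := al) (k3 := de) (k4 := ga)).
  - move=> Z; rewrite !inE subsetT andbT => /andP[ZY sZ].
    by apply: (type3_2_upper_be cY sY cd AllD sZ); move: ZY; rewrite sZ.
  - move=> Z; rewrite !inE sub0set /= => /orP[/eqP->//|/andP[h /andP[ZY YsZ]]].
    by apply: (type3_2_lower_al cY sY cd AllD ZY YsZ); move: h; rewrite ZY andbT.
  - by move=> Z; rewrite !inE => /andP[]; apply: (type3_2_interval_de cY sY cd AllD).
  - by move=> Z; rewrite !inE => /eqP->.
  - distinct_colors.
move=> Z; rewrite !inE negb_or subsetT andbT => /andP[sZ _].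
have [ncg ncd] := ga_unique_off_ga_de sZ.
case: (color_cases (c Z)) => cZ; [right; exists Y | left; exists setT | by [] | by []].
- by rewrite !inE eqxx.
- by rewrite cZ cY.
- by rewrite !inE !subsetT andbT /= subTset -properT YT.
- by rewrite cZ Hbe.
Qed.

End UniqueGa.

End NoRainbowBasics.

Section NoRainbowTypes.
#[local] Set Default Proof Using "All".
Variables (T : finType) (c : {set T} -> 'I_4).
Hypothesis NR : no_rainbow_B2 c.
Variables al be ga de : 'I_4.
Hypotheses (Hal : c set0 = al) (Hbe : c setT = be) (Hcol : uniq [:: al; be; ga; de]).
Implicit Types A B Z W Y d g m M s : {set T}.

Let color_cases := color_cases NR Hal Hbe Hcol.
Let rainbow_absurd := rainbow_absurd NR Hal Hbe Hcol.
Let ga_de_not_incomparable := ga_de_not_incomparable NR Hal Hbe Hcol.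
Let ga_de_comparable := ga_de_comparable NR Hal Hbe Hcol.
Let NR' : no_rainbow_B2 (dual c) := no_rainbow_dual (dualE c) NR.
Let Hal' : dual c set0 = be. Proof. by rewrite dual_set0. Qed.
Let Hbe' : dual c setT = al. Proof. by rewrite dual_setT. Qed.

Lemma no_alternating_chain m B A M : c m = ga -> c B = de -> c A = ga -> c M = de ->
  m \proper B -> B \proper A -> A \proper M -> False.
Proof.
move=> cm cB cA cM mB BA AM.
have [_ [x xA xB]] := properP BA; have [_ [y yM yA]] := properP AM.
have [_ [z zB zm]] := properP mB.
have [mU1 U1A iU1B _] := setU1_incomparable mB (subxx B) (proper_sub BA) xA xB.
have [BU2 U2M iU2A _] := setU1_incomparable BA (subxx A) (proper_sub AM) yM yA.
have cU1 := sandwiched_color NR Hal Hbe Hcol cm cB cA mB BA mU1 U1A iU1B.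
have cU2 := sandwiched_color NR Hal Hbe (uniq4_swap34 Hcol) cB cA cM BA AM BU2 U2M iU2A.
apply: (ga_de_not_incomparable cU2 cU1); apply: (incomparable_witness (x := z) (y := x)).
- exact: setU1r.
- by rewrite in_setU1 negb_or zm andbT; apply: contraNneq xB => <-.
- exact: setU11.
- rewrite in_setU1 negb_or xB andbT; apply: contraNneq yA => <-; exact: xA.
Qed.

Lemma extremal_ga_de_pairs_absurd m M A A' B B' : c m = ga -> c M = de ->
  (forall Z, c Z != al -> c Z != be -> #|m| <= #|Z|) ->
  (forall Z, c Z != al -> c Z != be -> #|Z| <= #|M|) ->
  c A = ga -> c A' = ga -> c B = de -> c B' = de -> A != A' -> B != B' -> False.
Proof.
move=> cm cM minm maxM cA cA' cB cB' nA nB.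
have above_m d : c d = de -> m \proper d.
  move=> cd; apply: (comparable_card_proper (c := c)); first by neq_colors.
    by apply: minm; neq_colors.
  exact: ga_de_comparable cm cd.
have below_M g : c g = ga -> g \proper M.
  move=> cg; apply: (comparable_card_proper (c := c)); first by neq_colors.
    by apply: maxM; neq_colors.
  exact: ga_de_comparable cg cM.
have ga_below_de g d : c g = ga -> c d = de -> g \proper d.
  move=> cg cd; case: (ga_de_comparable cg cd) => sub.
    by apply: (color_proper (c := c)) sub; neq_colors.
  have dg : d \proper g by apply: (color_proper (c := c)) sub; neq_colors.
  by case: (no_alternating_chain cm cd cg cM (above_m d cd) dg (below_M g cg)).
exact: (ga_pair_below_de_pair NR Hal Hbe Hcol cA cA' cB cB' (ga_below_de _ _ cA cB)
  (ga_below_de _ _ cA cB') (ga_below_de _ _ cA' cB) (ga_below_de _ _ cA' cB') nA nB).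
Qed.

Section Type2Construction.
Variables m M d : {set T}.
Hypotheses (cm : c m = ga) (cM : c M = ga) (cd : c d = de).
Hypotheses (minm : forall Z, c Z != al -> c Z != be -> #|m| <= #|Z|)
           (maxM : forall Z, c Z != al -> c Z != be -> #|Z| <= #|M|).

Lemma type2_de_between Z : c Z = de -> m \proper Z /\ Z \proper M.
Proof.
move=> cZ; split; apply: (comparable_card_proper (c := c)); try by neq_colors.
- by apply: minm; neq_colors.
- exact: ga_de_comparable cm cZ.
- by apply: maxM; neq_colors.
- exact/or_comm/(ga_de_comparable cM cZ).
Qed.

Lemma type2_interval_de : forall Z, m \proper Z -> Z \proper M -> c Z = de.
Proof.
have [md dM] := type2_de_between cd.
have MT : M \proper setT by color_bounds.
apply: (open_interval_incomparable_ind md dM cd) => Z W mZ ZM mW WM cW iZW.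
case: (color_cases (c Z)) => // cZ; exfalso.
- apply: (rainbow_absurd mZ mW (proper_trans ZM MT) (proper_trans WM MT) iZW); distinct_colors.
- by apply: (rainbow_absurd (W1 := set0) _ _ ZM WM iZW); color_bounds; distinct_colors.
- exact: ga_de_not_incomparable cZ cW iZW.
Qed.

Lemma type2_two_points : exists x y, [/\ x != y, x \in M, x \notin m, y \in M & y \notin m].
Proof.
have [md dM] := type2_de_between cd.
have [_ [x xd xm]] := properP md; have [_ [y yM yd]] := properP dM.
exists x, y; split=> //.
- by apply: contraNneq yd => <-.
- exact: (subsetP (proper_sub dM)).
- by apply: contra yd; apply: (subsetP (proper_sub md)).
Qed.

Lemma type2_setU1_de z w : z \in M -> z \notin m -> w \in M -> w \notin m -> w != z ->
  c (z |: m) = de.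
Proof.
have [md dM] := type2_de_between cd.
move=> zM zm wM wm wz; apply: (type2_interval_de (proper_setU1 zm)).
apply: (proper_witness _ wM); last by rewrite in_setU1 negb_or wz.
by rewrite subUset sub1set zM (proper_sub (proper_trans md dM)).
Qed.

Lemma type2_ga_top g z w : c g = ga ->
  z \in M -> z \notin m -> w \in M -> w \notin m -> w != z -> z |: m \subset g -> g = M.
Proof.
move=> cg zM zm wM wm wz zg; apply/eqP; rewrite eq_sym eqEcard maxM ?andbT; try by neq_colors.
apply/subsetP => v vM; case: (boolP (v \in m)) => vm; first exact: (subsetP zg v (setU1r z vm)).
case: (eqVneq v z) => [->|vz]; first exact: (subsetP zg z (setU11 z m)).
have zv : z != v by rewrite eq_sym.
case: (ga_de_comparable cg (type2_setU1_de vM vm zM zm zv)) => sub.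
  have := subsetP sub z (subsetP zg z (setU11 z m)).
  by rewrite in_setU1 (negbTE zm) orbF (negbTE zv).
exact: (subsetP sub v (setU11 v m)).
Qed.

Lemma type2_ga_ends g : c g = ga -> g = m \/ g = M.
Proof.
move=> cg; have [x [y [xy xM xm yM ym]]] := type2_two_points.
have yx : y != x by rewrite eq_sym.
case: (ga_de_comparable cg (type2_setU1_de xM xm yM ym yx)) => [gx | xg].
  case: (ga_de_comparable cg (type2_setU1_de yM ym xM xm xy)) => [gy | yg].
    left; apply/eqP; rewrite eqEcard minm ?andbT; try by neq_colors.
    apply/subsetP => v vg; have := subsetP gx v vg; have := subsetP gy v vg.
    rewrite !in_setU1; case/orP=> [/eqP vy | //]; case/orP=> [/eqP vx | //].
    by move: xy; rewrite -vx -vy eqxx.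
  by right; exact: (type2_ga_top cg yM ym xM xm xy).
by right; exact: (type2_ga_top cg xM xm yM ym yx).
Qed.

Lemma type2_upper_be Z : m \subset Z -> ~~ (Z \subset M) -> c Z = be.
Proof.
have [md dM] := type2_de_between cd; have mM := proper_trans md dM.
have [x [y [xy xM xm yM ym]]] := type2_two_points.
have cM' : dual c (~: M) = ga by rewrite dual_setC.
have cm' : dual c (~: m) = ga by rewrite dual_setC.
move=> mZ ZM; rewrite -[Z]setCK.
apply: (type2_lower_color NR' Hal' Hbe' (uniq4_swap12 Hcol) cM' cm' _ _ _ _ xy) => //.
- by rewrite properC.
- by move=> W /type2_ga_ends[] <-; rewrite setCK; [right | left].
- by move=> W MW Wm; apply: type2_interval_de; [rewrite properCr | rewrite properCl].
- by move=> W /type2_de_between[_ WM]; rewrite -[W]setCK setCS proper_sub.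
- by rewrite inE.
- by rewrite inE negbK.
- by rewrite inE.
- by rewrite inE negbK.
- by rewrite setCS.
- by rewrite setCS.
Qed.

Lemma type2_of_extremes : Type2 c.
Proof.
have [md dM] := type2_de_between cd; have mM := proper_trans md dM.
have [x [y [xy xM xm yM ym]]] := type2_two_points.
have Dc Z : c Z = de -> m \subset Z by move=> cZ; exact: proper_sub (type2_de_between cZ).1.
have low := type2_lower_color NR Hal Hbe Hcol cm cM mM type2_ga_ends type2_interval_de Dc
  xy xM xm yM ym.
have nsub0 : ~~ (m \subset set0) by rewrite subset0 -proper0; color_bounds.
have nsubT : ~~ (setT \subset M) by rewrite subTset -properT; color_bounds.
exists m, M; split.
  split=> //; first by color_bounds.
  - by color_bounds.
  - by rewrite addn2; exact: leq_ltn_trans (proper_card md) (proper_card dM).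
split.
  apply: (mono_distinct4_of (k1 := al) (k2 := ga) (k3 := de) (k4 := be)).
  - move=> Z; rewrite !inE => /andP[h /andP[_ ZM]]; apply: low => //.
    by move: h; rewrite ZM andbT.
  - by move=> Z; rewrite !inE => /orP[] /eqP->.
  - by move=> Z; rewrite !inE => /andP[]; apply: type2_interval_de.
  - move=> Z; rewrite !inE => /andP[h /andP[mZ _]]; apply: type2_upper_be => //.
    by move: h; rewrite mZ.
  - distinct_colors.
move=> Z; rewrite !inE negb_or sub0set /= => /andP[ZM mZ].
case: (color_cases (c Z)) => cZ; [left; exists set0 | right; exists setT | exfalso | exfalso].
- by rewrite !inE !sub0set (negbTE nsub0).
- by rewrite cZ Hal.
- by rewrite !inE !subsetT (negbTE nsubT).
- by rewrite cZ Hbe.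
- by case: (type2_ga_ends cZ) => E; move: mZ ZM; rewrite E ?(proper_sub mM) subxx.
- by have [h1 h2] := type2_de_between cZ; move: mZ ZM; rewrite ?(proper_sub h1) ?(proper_sub h2).
Qed.

End Type2Construction.

Lemma type4_2_upper_be s d Z : c s = ga -> (forall Z, c Z = ga -> Z = s) ->
  c d = de -> (forall Z, c Z = de -> Z = d) -> s \proper d ->
  s \proper Z -> ~~ (Z \subset d) -> c Z = be.
Proof.
move=> cs Gs cd Dd sd sZ Zd.
have cd' : dual c (~: d) = de by rewrite dual_setC.
have cs' : dual c (~: s) = ga by rewrite dual_setC.
rewrite -[Z]setCK.
apply: (below_de_off_ga_al NR' Hal' Hbe' (uniq4_swap12 (uniq4_swap34 Hcol)) cd' _ _ cs').
- by move=> W cW; rewrite -(Dd _ cW) setCK.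
- by move=> W cW; rewrite -[W]setCK (Gs _ cW) properC.
- by rewrite properC.
- by rewrite setCS.
Qed.

Lemma type4_2_of_unique_de s d : c s = ga -> (forall Z, c Z = ga -> Z = s) ->
  (forall Z, c Z = de -> s \proper Z) -> c d = de -> (forall Z, c Z = de -> Z = d) ->
  (forall Z, Z \proper d -> c Z != be) -> Type4_2 c.
Proof.
move=> cs Gs Dab cd Dd nobe; have sd := Dab d cd.
have dT : d \proper setT by color_bounds.
have s0 : set0 \proper s by color_bounds.
exists d, [set s]; split.
  split.
  - by have := proper_card sd; have := proper_card s0; rewrite cards0; lia.
  - by have := proper_card dT; rewrite cardsT; lia.
  - by apply/set0Pn; exists s; rewrite inE.
  - by rewrite sub1set !inE s0 sd.
rewrite /= !big_set1; split.
  apply: (mono_distinct4_of (k1 := be) (k2 := de) (k3 := al) (k4 := ga)).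
  - move=> Z; rewrite !inE subsetT andbT => /andP[h sZ].
    apply: (type4_2_upper_be cs Gs cd Dd sd sZ).
    by move: h; rewrite sZ.
  - by move=> Z; rewrite inE => /eqP->.
  - move=> Z; rewrite !inE sub0set /= => /andP[Zs Zd].
    case: (color_cases (c Z)) => cZ //; exfalso.
    + by move: (nobe Z Zd); rewrite cZ eqxx.
    + by move: Zs; rewrite (Gs Z cZ) eqxx.
    + by move: Zd; rewrite (Dd Z cZ) properxx.
  - by move=> Z; rewrite inE => /eqP->.
  - distinct_colors.
move=> Z; rewrite !inE negb_or sub0set subsetT andbT /= => /andP[Zd sZ].
case: (color_cases (c Z)) => cZ; [right; exists set0 | left; exists setT | exfalso | exfalso].
- by rewrite !inE sub0set (proper_trans s0 sd) !andbT eq_sym -proper0.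
- by rewrite cZ Hal.
- by rewrite !inE !subsetT andbT /= (proper_trans sd dT) subTset -properT dT.
- by rewrite cZ Hbe.
- by move: Zd; rewrite (Gs _ cZ) (proper_sub sd).
- by move: Zd; rewrite (Dd _ cZ) subxx.
Qed.

Lemma types_of_unique_ga_below_de s d : c s = ga -> (forall Z, c Z = ga -> Z = s) ->
  (forall Z, c Z = de -> s \proper Z) -> c d = de -> Type4_1s c \/ Type4_2 c \/ Type3_2 c.
Proof.
move=> cs Gs Dab cd.
case: (pickP [pred p : {set T} * {set T} |
    [&& c p.1 == al, s \proper p.1, c p.2 == de & p.1 \proper p.2]]) => [[Y d'] | noYd].
  case/and4P=> /eqP cY sY /eqP cd' Yd'; right; left.
  apply: (type4_2_of_unique_de cs Gs Dab cd').
  - by move=> Z; apply: (de_unique_above_al NR Hal Hbe Hcol cs Gs Dab cY cd' sY Yd').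
  - by move=> Z; apply: (below_de_not_be NR Hal Hbe Hcol cs Gs Dab cY cd' sY Yd').
case: (pickP [pred Y | (c Y == al) && (s \proper Y)]) => [Y /andP[/eqP cY sY] | noY].
  right; right; apply: (type3_2_of_al_above NR Hal Hbe Hcol cs Gs Dab cY sY cd).
  move=> Y' d' cY' sY' cd'.
  case: (al_de_above_ga_comparable NR Hal Hbe Hcol cs cY' cd' sY' (Dab _ cd')) => sub.
    have Yd' : Y' \proper d' by apply: (color_proper (c := c)) sub; neq_colors.
    by have := noYd (Y', d'); rewrite /= cY' cd' sY' Yd' !eqxx.
  by apply: (color_proper (c := c)) sub; neq_colors.
left; apply: (type4_1s_of_no_al_above NR Hal Hbe Hcol cs Gs Dab cd) => Z sZ cZ.
by have := noY Z; rewrite /= cZ eqxx sZ.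
Qed.

End NoRainbowTypes.

Section NoRainbowClassification.
#[local] Set Default Proof Using "All".
Variables (T : finType) (c : {set T} -> 'I_4).
Hypothesis NR : no_rainbow_B2 c.
Variables al be ga de : 'I_4.
Hypotheses (Hal : c set0 = al) (Hbe : c setT = be) (Hcol : uniq [:: al; be; ga; de]).
Implicit Types A B Z s d m M : {set T}.

Lemma types_of_unique_ga_above_de s d : c s = ga -> (forall Z, c Z = ga -> Z = s) ->
  (forall Z, c Z = de -> Z \proper s) -> c d = de -> Type4_2 c \/ Type4_1 c \/ Type3_1 c.
Proof.
move=> cs Gs Dbe cd.
have Hal' : dual c set0 = be by rewrite dual_set0.
have Hbe' : dual c setT = al by rewrite dual_setT.
have cs' : dual c (~: s) = ga by rewrite dual_setC.
have cd' : dual c (~: d) = de by rewrite dual_setC.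
have NR' := no_rainbow_dual (dualE c) NR.
case: (types_of_unique_ga_below_de NR' Hal' Hbe' (uniq4_swap12 Hcol) cs' _ _ cd').
- by move=> Z cZ; rewrite -(Gs _ cZ) setCK.
- by move=> Z cZ; rewrite properCl; apply: Dbe.
- by move/(type4_2_of_dual (dualE c)); left.
- case=> [/(type4_1_of_dual (dualE c)) | /(type3_1_of_dual (dualE c))].
  + by right; left.
  + by right; right.
Qed.

Lemma types_of_unique_ga s d : c s = ga -> (forall Z, c Z = ga -> Z = s) -> c d = de ->
  Type2 c \/ Type3_1 c \/ Type3_2 c \/ Type4_1 c \/ Type4_2 c.
Proof.
move=> cs Gs cd.
have de_side Z : c Z = de -> s \proper Z \/ Z \proper s.
  move=> cZ; case: (ga_de_comparable NR Hal Hbe Hcol cs cZ) => sub; [left | right];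
    by apply: (color_proper (c := c)) sub; neq_colors.
case: (pickP [pred B | (c B == de) && (B \proper s)]) => [B /andP[/eqP cB Bs] | noB].
  have Dbe Z : c Z = de -> Z \proper s.
    move=> cZ; case: (de_side Z cZ) => // sZ.
    by case: (de_on_both_sides_absurd NR Hal Hbe Hcol cs Gs cB cZ Bs sZ).
  by case: (types_of_unique_ga_above_de cs Gs Dbe cd); tauto.
have Dab Z : c Z = de -> s \proper Z.
  by move=> cZ; case: (de_side Z cZ) => // Zs; have := noB Z; rewrite /= cZ eqxx Zs.
by case: (types_of_unique_ga_below_de NR Hal Hbe Hcol cs Gs Dab cd) => [/type4_1s_type4_1|]; tauto.
Qed.

Lemma type2_of_two_ga_two_de A A' B B' : c A = ga -> c A' = ga -> A != A' ->
  c B = de -> c B' = de -> B != B' -> Type2 c.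
Proof.
move=> cA cA' nA cB cB' nB.
pose mid := [pred Z | (c Z != al) && (c Z != be)].
have midA : mid A by rewrite /= cA; apply/andP; split; neq_colors.
have [m mid_m minm] := arg_minnP (fun Z => #|Z|) midA.
have [M mid_M maxM] := arg_maxnP (fun Z => #|Z|) midA.
have minm' Z : c Z != al -> c Z != be -> #|m| <= #|Z| by move=> na nb; apply: minm; apply/andP.
have maxM' Z : c Z != al -> c Z != be -> #|Z| <= #|M| by move=> na nb; apply: maxM; apply/andP.
have mid_cases Z : mid Z -> c Z = ga \/ c Z = de.
  case/andP=> na nb; case: (color_cases NR Hal Hbe Hcol (c Z)) => cZ; [| | by left | by right].
  - by rewrite cZ eqxx in na.
  - by rewrite cZ eqxx in nb.
have Hcol' := uniq4_swap34 Hcol.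
case: (mid_cases m mid_m) => cm; case: (mid_cases M mid_M) => cM.
- exact: (type2_of_extremes NR Hal Hbe Hcol cm cM cB minm' maxM').
- by case: (extremal_ga_de_pairs_absurd NR Hal Hbe Hcol cm cM minm' maxM' cA cA' cB cB' nA nB).
- by case: (extremal_ga_de_pairs_absurd NR Hal Hbe Hcol' cm cM minm' maxM' cB cB' cA cA' nB nA).
- exact: (type2_of_extremes NR Hal Hbe Hcol' cm cM cA minm' maxM').
Qed.

End NoRainbowClassification.

Lemma two_more_colors (a b : 'I_4) : a != b -> exists g d : 'I_4, uniq [:: a; b; g; d].
Proof.
move=> ab; set S := ~: [set a; b].
have cS : #|S| = 2.
  have := cardsC [set a; b]; rewrite cards2 ab card_ord => cS.
  by apply/eqP; rewrite -(eqn_add2l 2); apply/eqP.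
have [g gS] : exists g, g \in S by apply/card_gt0P; rewrite cS.
have [d dS] : exists d, d \in S :\ g.
  by apply/card_gt0P; rewrite (cardsD1 g S) gS in cS; rewrite -(ltn_add2l 1) cS.
exists g, d; move: gS dS; rewrite !inE !negb_or => /andP[ga gb] /andP[dg /andP[da db]].
rewrite /= !inE !negb_or (eq_sym a g) (eq_sym a d) (eq_sym b g) (eq_sym b d) (eq_sym g d).
by rewrite ab ga gb da db dg.
Qed.

Lemma types_of_no_rainbow (T : finType) (c : {set T} -> 'I_4) :
  exact_coloring c -> c set0 <> c setT -> no_rainbow_B2 c ->
  Type2 c \/ Type3_1 c \/ Type3_2 c \/ Type4_1 c \/ Type4_2 c.
Proof.
move=> ex /eqP ne NR; have [ga [de Hcol]] := two_more_colors ne.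
have [A cA] := ex ga; have [B cB] := ex de.
case: (unique_or_another [pred Z | c Z == ga] A) => [Gs | [A' /eqP cA' nA]].
  by apply: (types_of_unique_ga NR erefl erefl Hcol cA _ cB) => Z /eqP /Gs.
case: (unique_or_another [pred Z | c Z == de] B) => [Gd | [B' /eqP cB' nB]].
  by apply: (types_of_unique_ga NR erefl erefl (uniq4_swap34 Hcol) cB _ cA) => Z /eqP /Gd.
by left; apply: (type2_of_two_ga_two_de NR erefl erefl Hcol cA' cA nA cB' cB nB).
Qed.

Section Type4_1NoRainbow.
Variables (T : finType) (c : {set T} -> 'I_4) (X0 : {set T}) (YY : {set {set T}}).
Hypotheses (X0n0 : 1 <= #|X0|) (YYn0 : YY != set0) (YYup : YY \subset Boc X0 setT).
Let F1 := \bigcup_(Y in YY) (Bco set0 Y :\: Bco X0 Y).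
Let F3 := Boc X0 setT :\: YY.
Hypothesis md : mono_distinct4 c F1 [set X0] F3 YY.
Hypothesis rest : forall Z, Z \notin Bcc X0 setT :|: \bigcup_(Y in YY) Bco set0 Y ->
  has_color_of c Z F1 \/ has_color_of c Z F3.
Implicit Types W Y Z : {set T}.

Lemma type4_1_X0_below Y : Y \in YY -> X0 \proper Y.
Proof. by move=> YYY; have := subsetP YYup Y YYY; rewrite !inE => /andP[]. Qed.

Lemma type4_1_F1 Y Z : Y \in YY -> Z \proper Y -> ~~ (X0 \subset Z) -> Z \in F1.
Proof. by move=> YYY ZY XZ; apply/bigcupP; exists Y; rewrite // !inE sub0set ZY negb_and XZ. Qed.

Lemma type4_1_other_color Z : Z != X0 -> Z \notin YY ->
  has_color_of c Z F1 \/ has_color_of c Z F3.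
Proof.
move=> ZX ZY; case: (boolP (X0 \subset Z)) => XZ.
  by right; exists Z; rewrite // !inE ZY subsetT andbT properEneq eq_sym ZX.
case: (boolP (Z \in \bigcup_(Y in YY) Bco set0 Y)) => [/bigcupP[Y YYY] | ZnY].
  by rewrite !inE sub0set => ZY'; left; exists Z; first exact: type4_1_F1 YYY ZY' XZ.
by apply: rest; rewrite in_setU negb_or ZnY andbT inE (negbTE XZ).
Qed.

Lemma type4_1_above_X0 Z : X0 \subset Z -> c Z <> c set0.
Proof.
have [_ _ _ _ [d12 d13 d14 _ _]] := md; have [Y1 Y1in] := set0Pn _ YYn0.
have F1_0 : set0 \in F1.
  apply: (type4_1_F1 Y1in); first exact: sub_proper_trans (sub0set X0) (type4_1_X0_below Y1in).
  by rewrite subset0 -card_gt0.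
move=> XZ; apply/nesym; case: (eqVneq Z X0) => [->|ZX]; first exact: d12 F1_0 (set11 X0).
case: (boolP (Z \in YY)) => ZY; first exact: d14.
by apply: d13; rewrite // !inE ZY subsetT andbT properEneq eq_sym ZX.
Qed.

Lemma type4_1_X0_color Z : c Z = c X0 -> Z = X0.
Proof.
have [_ _ _ _ [d12 _ _ d23 [d24 _]]] := md.
move=> cZ; case: (eqVneq Z X0) => // ZX; exfalso.
case: (boolP (Z \in YY)) => ZY; first by apply: (d24 _ _ (set11 X0) ZY); rewrite cZ.
case: (type4_1_other_color ZX ZY) => -[A AF cA].
- by apply: (d12 _ _ AF (set11 X0)); rewrite -cA.
- by apply: (d23 _ _ (set11 X0) AF); rewrite -cA.
Qed.

Lemma type4_1_YY_color Y Z : Y \in YY -> c Z = c Y -> Z \in YY.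
Proof.
have [_ _ _ _ [_ _ d14 _ [d24 d34]]] := md.
move=> YYY cZ; apply: contraT => ZY; exfalso.
case: (eqVneq Z X0) => [ZX | ZX]; first by apply: (d24 _ _ (set11 X0) YYY); rewrite -ZX.
case: (type4_1_other_color ZX ZY) => -[A AF cA].
- by apply: (d14 _ _ AF YYY); rewrite -cA.
- by apply: (d34 _ _ AF YYY); rewrite -cA.
Qed.

Lemma type4_1_no_rainbow : no_rainbow_B2 c.
Proof.
have [m1 _ _ _ _] := md; have [Y1 Y1in] := set0Pn _ YYn0.
have X0_second W1 W2 W3 W4 : rainbow_B2 c W1 W2 W3 W4 -> W2 = X0 -> False.
  move=> rb EX; have [[h12 _ h24 h34] /andP[i23 _] u] := rb.
  case: (rainbow_color_cover (c Y1) rb) => /(type4_1_YY_color Y1in) WY.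
  - by have := proper_trans (type4_1_X0_below WY) h12; rewrite EX properxx.
  - by have := type4_1_X0_below WY; rewrite EX properxx.
  - by move: i23; rewrite EX (proper_sub (type4_1_X0_below WY)).
  have W1F : W1 \in F1.
    apply: (type4_1_F1 WY (proper_trans h12 h24)).
    by rewrite -EX; apply/negP => /(proper_sub_trans h12); rewrite properxx.
  have W3F : W3 \in F1 by apply: (type4_1_F1 WY h34); rewrite -EX.
  by move: u; rewrite /= (m1 _ _ W1F W3F) !inE eqxx ?orbT.
move=> W1 W2 W3 W4 rb; have [[h12 _ h24 h34] _ _] := rb.
case: (rainbow_color_cover (c X0) rb) => /type4_1_X0_color EX.
- by apply: (rainbow_above_color (k := c set0) rb); rewrite EX; exact: type4_1_above_X0.
- exact: X0_second rb EX.
- exact: X0_second (rainbow_B2_swap rb) EX.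
have W14 := proper_sub (proper_trans h12 h24).
case: (rainbow_color_cover (c Y1) rb) => /(type4_1_YY_color Y1in) /type4_1_X0_below XW.
- by have := proper_sub_trans XW W14; rewrite EX properxx.
- by have := proper_sub_trans XW (proper_sub h24); rewrite EX properxx.
- by have := proper_sub_trans XW (proper_sub h34); rewrite EX properxx.
- by move: XW; rewrite EX properxx.
Qed.

End Type4_1NoRainbow.

Section Type2NoRainbow.
Variables (T : finType) (c : {set T} -> 'I_4) (X0 Y0 : {set T}).
Hypothesis params : type23_params X0 Y0.
Let F1 := Bcc set0 Y0 :\: Bcc X0 Y0.
Let F4 := Bcc X0 setT :\: Bcc X0 Y0.
Hypothesis md : mono_distinct4 c F1 [set X0; Y0] (Boo X0 Y0) F4.
Hypothesis rest : forall Z, Z \notin Bcc set0 Y0 :|: Bcc X0 setT ->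
  has_color_of c Z F1 \/ has_color_of c Z F4.
Implicit Types I W Z : {set T}.

Lemma type2_cases Z : [\/ Z = X0 \/ Z = Y0, Z \in Boo X0 Y0, Z \in F1 \/ Z \in F4 |
  [/\ ~~ (X0 \subset Z), ~~ (Z \subset Y0) & has_color_of c Z F1 \/ has_color_of c Z F4]].
Proof.
case: (boolP (X0 \subset Z)) => XZ; case: (boolP (Z \subset Y0)) => ZY.
- case: (eqVneq Z X0) => [->|nX]; first by constructor 1; left.
  case: (eqVneq Z Y0) => [->|nY]; first by constructor 1; right.
  by constructor 2; rewrite !inE !properEneq XZ ZY eq_sym nX nY.
- by constructor 3; right; rewrite !inE XZ ZY subsetT.
- by constructor 3; left; rewrite !inE (negbTE XZ) ZY sub0set.
- constructor 4; split => //; apply: rest.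
  by rewrite !inE negb_or sub0set (negbTE XZ) (negbTE ZY).
Qed.

Lemma type2_set0_F1 : set0 \in F1.
Proof. by case: params => X00 _ _ _; rewrite !inE !sub0set !andbT subset0 -proper0. Qed.

Lemma type2_setT_F4 : setT \in F4.
Proof. by case: params => _ _ Y0T _; rewrite !inE !subsetT !andbT subTset -properT. Qed.

Lemma type2_above_X0 Z : X0 \subset Z -> c Z <> c set0.
Proof.
have [_ _ _ _ [d12 d13 d14 _ _]] := md; have F1_0 := type2_set0_F1.
move=> XZ; apply/nesym; case: (type2_cases Z) => [[->|->] | ZI | [ZF|ZF] | [nXZ _ _]].
- exact: d12 F1_0 (set21 X0 Y0).
- exact: d12 F1_0 (set22 X0 Y0).
- exact: d13 F1_0 ZI.
- by move: ZF; rewrite !inE XZ sub0set /= andNb.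
- exact: d14 F1_0 ZF.
- by rewrite XZ in nXZ.
Qed.

Lemma type2_below_Y0 Z : Z \subset Y0 -> c Z <> c setT.
Proof.
have [_ _ _ _ [_ _ d14 _ [d24 d34]]] := md; have TF4 := type2_setT_F4.
move=> ZY; case: (type2_cases Z) => [[->|->] | ZI | [ZF|ZF] | [_ nZY _]].
- exact: d24 (set21 X0 Y0) TF4.
- exact: d24 (set22 X0 Y0) TF4.
- exact: d34 ZI TF4.
- exact: d14 ZF TF4.
- by move: ZF; rewrite !inE ZY subsetT !andbT andNb.
- by rewrite ZY in nZY.
Qed.

Lemma type2_interior_color I Z : I \in Boo X0 Y0 -> c Z = c I -> Z \in Boo X0 Y0.
Proof.
have [_ _ _ _ [_ d13 _ d23 [_ d34]]] := md.
move=> II cZ; case: (type2_cases Z) => [[E|E] | // | [ZF|ZF] | [_ _ [[A AF e]|[A AF e]]]]; exfalso.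
- by apply: (d23 _ _ (set21 X0 Y0) II); rewrite -E.
- by apply: (d23 _ _ (set22 X0 Y0) II); rewrite -E.
- by apply: (d13 _ _ ZF II).
- by apply: (d34 _ _ II ZF).
- by apply: (d13 _ _ AF II); rewrite -e.
- by apply: (d34 _ _ II AF); rewrite -e.
Qed.

Lemma type2_X0_color Z : c Z = c X0 -> Z = X0 \/ Z = Y0.
Proof.
have [_ _ _ _ [d12 _ _ d23 [d24 _]]] := md.
move=> cZ; case: (type2_cases Z) => [// | ZI | [ZF|ZF] | [_ _ [[A AF e]|[A AF e]]]]; exfalso.
- by apply: (d23 _ _ (set21 X0 Y0) ZI).
- by apply: (d12 _ _ ZF (set21 X0 Y0)).
- by apply: (d24 _ _ (set21 X0 Y0) ZF).
- by apply: (d12 _ _ AF (set21 X0 Y0)); rewrite -e.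
- by apply: (d24 _ _ (set21 X0 Y0) AF); rewrite -e.
Qed.

Lemma type2_no_rainbow : no_rainbow_B2 c.
Proof.
have [_ XY _ cXY] := params; have [I [XI IY]] := exists_strictly_between XY cXY.
have II : I \in Boo X0 Y0 by rewrite !inE XI IY.
have above W1 W2 W3 W4 : rainbow_B2 c W1 W2 W3 W4 -> X0 \subset W1 -> False.
  move=> rb XW; apply: (rainbow_above_color (k := c set0) rb) => Z WZ.
  exact: type2_above_X0 (subset_trans XW WZ).
have below W1 W2 W3 W4 : rainbow_B2 c W1 W2 W3 W4 -> W4 \subset Y0 -> False.
  move=> rb WY; apply: (rainbow_below_color (k := c setT) rb) => Z ZW.
  exact: type2_below_Y0 (subset_trans ZW WY).
have interior_second W1 W2 W3 W4 : rainbow_B2 c W1 W2 W3 W4 -> W2 \in Boo X0 Y0 -> False.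
  move=> rb; rewrite inE => /andP[XW WY]; have [[h12 _ h24 _] /andP[i23 i32] _] := rb.
  case: (rainbow_color_cover (c X0) rb) => /type2_X0_color [] E.
  - by apply: (above _ _ _ _ rb); rewrite E.
  - by have := proper_trans h12 WY; rewrite E properxx.
  - by move: XW; rewrite E properxx.
  - by move: WY; rewrite E properxx.
  - by move: i32; rewrite E (proper_sub XW).
  - by move: i23; rewrite E (proper_sub WY).
  - by have := proper_trans XW h24; rewrite E properxx.
  - by apply: (below _ _ _ _ rb); rewrite E.
move=> W1 W2 W3 W4 rb.
case: (rainbow_color_cover (c I) rb) => /(type2_interior_color II) WI.
- by apply: (above _ _ _ _ rb); move: WI; rewrite inE => /andP[/proper_sub].
- exact: interior_second rb WI.
- exact: interior_second (rainbow_B2_swap rb) WI.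
- by apply: (below _ _ _ _ rb); move: WI; rewrite inE => /andP[_ /proper_sub].
Qed.

End Type2NoRainbow.

Section Type3_2NoRainbow.
Variables (T : finType) (c : {set T} -> 'I_4) (X0 Y0 : {set T}).
Hypothesis params : type23_params X0 Y0.
Let F1 := Bcc X0 setT :\: Bcc X0 Y0.
Let F2 := Y0 |: (Bdown X0 Y0 :\: Bco X0 Y0).
Hypothesis md : mono_distinct4 c F1 F2 (Boo X0 Y0) [set X0].
Hypothesis rest : forall Z, Z \notin Bcc X0 setT :|: Bdown X0 Y0 ->
  has_color_of c Z F1 \/ has_color_of c Z F2.
Implicit Types I W Z : {set T}.

Lemma type3_2_F2 Z : Z \proper Y0 -> ~~ (X0 \subset Z) -> ~~ (Y0 :\: X0 \subset Z) -> Z \in F2.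
Proof. by move=> ZY XZ YXZ; rewrite !inE ZY (negbTE XZ) YXZ sub0set orbT. Qed.

Lemma type3_2_cases Z : [\/ Z = X0 \/ Z = Y0, Z \in Boo X0 Y0, Z \in F1 |
  ~~ (X0 \subset Z) /\ (Z \in F2 \/ has_color_of c Z F1 \/ has_color_of c Z F2)].
Proof.
case: (boolP (X0 \subset Z)) => XZ.
  case: (eqVneq Z X0) => [->|nX]; first by constructor 1; left.
  case: (boolP (Z \subset Y0)) => ZY; last by constructor 3; rewrite !inE XZ ZY subsetT.
  case: (eqVneq Z Y0) => [->|nY]; first by constructor 1; right.
  by constructor 2; rewrite !inE !properEneq XZ ZY eq_sym nX nY.
constructor 4; split => //; case: (boolP (Z \in Bdown X0 Y0)) => ZD.
  by left; rewrite in_setU1 in_setD ZD andbT inE negb_and XZ orbT.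
by right; apply: rest; rewrite in_setU negb_or ZD andbT inE (negbTE XZ).
Qed.

Lemma type3_2_X0_color Z : c Z = c X0 -> Z = X0.
Proof.
have [_ _ _ _ [_ _ d14 _ [d24 d34]]] := md; have Y0F2 : Y0 \in F2 by rewrite !inE eqxx.
move=> cZ; case: (type3_2_cases Z) => [[// | E] | ZI | ZF | [_ [ZF | [[A AF e] | [A AF e]]]]];
  exfalso.
- by apply: (d24 _ _ Y0F2 (set11 X0)); rewrite -cZ E.
- by apply: (d34 _ _ ZI (set11 X0)).
- by apply: (d14 _ _ ZF (set11 X0)).
- by apply: (d24 _ _ ZF (set11 X0)).
- by apply: (d14 _ _ AF (set11 X0)); rewrite -e.
- by apply: (d24 _ _ AF (set11 X0)); rewrite -e.
Qed.

Lemma type3_2_interior_color I Z : I \in Boo X0 Y0 -> c Z = c I -> Z \in Boo X0 Y0.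
Proof.
have [_ _ _ _ [_ d13 _ d23 [_ d34]]] := md; have Y0F2 : Y0 \in F2 by rewrite !inE eqxx.
move=> II cZ; case: (type3_2_cases Z) => [[E|E] | // | ZF | [_ [ZF | [[A AF e] | [A AF e]]]]];
  exfalso.
- by apply: (d34 _ _ II (set11 X0)); rewrite -cZ E.
- by apply: (d23 _ _ Y0F2 II); rewrite -cZ E.
- by apply: (d13 _ _ ZF II).
- by apply: (d23 _ _ ZF II).
- by apply: (d13 _ _ AF II); rewrite -e.
- by apply: (d23 _ _ AF II); rewrite -e.
Qed.

Lemma type3_2_Y0_color Z : c Z = c Y0 -> X0 \subset Z -> Z = Y0.
Proof.
have [_ _ _ _ [d12 _ _ d23 [d24 _]]] := md; have Y0F2 : Y0 \in F2 by rewrite !inE eqxx.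
move=> cZ XZ; case: (type3_2_cases Z) => [[E | //] | ZI | ZF | [nXZ _]]; exfalso.
- by apply: (d24 _ _ Y0F2 (set11 X0)); rewrite -cZ E.
- by apply: (d23 _ _ Y0F2 ZI); rewrite -cZ.
- by apply: (d12 _ _ ZF Y0F2).
- by rewrite XZ in nXZ.
Qed.

Lemma type3_2_between_color Z : X0 \subset Z -> Z \subset Y0 -> c Z <> c setT.
Proof.
have [_ _ _ _ [d12 d13 d14 _ _]] := md; have Y0F2 : Y0 \in F2 by rewrite !inE eqxx.
have TF1 : setT \in F1 by case: params => _ _ Y0T _; rewrite !inE !subsetT !andbT subTset -properT.
move=> XZ ZY; apply/nesym; case: (type3_2_cases Z) => [[->|->] | ZI | ZF | [nXZ _]].
- exact: d14 TF1 (set11 X0).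
- exact: d12 TF1 Y0F2.
- exact: d13 TF1 ZI.
- by move: ZF; rewrite !inE XZ ZY.
- by rewrite XZ in nXZ.
Qed.

Lemma type3_2_interior : exists I, I \in Boo X0 Y0.
Proof.
have [_ XY _ cXY] := params; have [I [XI IY]] := exists_strictly_between XY cXY.
by exists I; rewrite !inE XI IY.
Qed.

Lemma type3_2_rainbow_second_X0 W1 W2 W3 W4 : rainbow_B2 c W1 W2 W3 W4 -> W2 != X0.
Proof.
move=> rb; apply/eqP => EX; have [[h12 _ h24 h34] /andP[i23 _] u] := rb.
have [m1 m2 _ _ _] := md; have [I II] := type3_2_interior.
case: (rainbow_color_cover (c I) rb) => /(type3_2_interior_color II); rewrite inE => /andP[XW WY].
- by have := proper_trans XW h12; rewrite EX properxx.
- by move: XW; rewrite EX properxx.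
- by move: i23; rewrite EX (proper_sub XW).
have XW4 := proper_sub XW.
have W1F : W1 \in F2.
  apply: type3_2_F2; first exact: proper_trans (proper_trans h12 h24) WY.
  - by rewrite -EX; apply/negP => /(proper_sub_trans h12); rewrite properxx.
  - exact: setD_nsubset XW4 WY (proper_sub (proper_trans h12 h24)).
have W3F : W3 \in F2.
  apply: type3_2_F2; first exact: proper_trans h34 WY.
  - by rewrite -EX.
  - exact: setD_nsubset XW4 WY (proper_sub h34).
by move: u; rewrite /= (m2 _ _ W1F W3F) !inE eqxx ?orbT.
Qed.

Lemma type3_2_rainbow_first_X0 W1 W2 W3 W4 : rainbow_B2 c W1 W2 W3 W4 -> W1 != X0.
Proof.
move=> rb; apply/eqP => EX; have [[h12 h13 h24 h34] _ _] := rb.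
have [I II] := type3_2_interior.
have Y0_second V2 V3 : rainbow_B2 c W1 V2 V3 W4 -> V2 = Y0 -> False.
  move=> rb' E2; have [[_ _ h24' _] /andP[_ i32] _] := rb'.
  case: (rainbow_color_cover (c I) rb') => /(type3_2_interior_color II);
    rewrite inE => /andP[XW WY].
  - by move: XW; rewrite EX properxx.
  - by move: WY; rewrite E2 properxx.
  - by move: i32; rewrite E2 (proper_sub WY).
  - by have := proper_trans h24' WY; rewrite E2 properxx.
have XW2 : X0 \subset W2 by rewrite -EX proper_sub.
have XW3 : X0 \subset W3 by rewrite -EX proper_sub.
have XW4 : X0 \subset W4 by rewrite -EX (proper_sub (proper_trans h12 h24)).
case: (rainbow_color_cover (c Y0) rb) => /type3_2_Y0_color EY.
- have [_ XY _ _] := params.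
  by have := EY; rewrite EX subxx => /(_ isT) YX; rewrite YX properxx in XY.
- exact: Y0_second rb (EY XW2).
- exact: Y0_second (rainbow_B2_swap rb) (EY XW3).
have W4Y : W4 \subset Y0 by rewrite (EY XW4).
case: (rainbow_color_cover (c setT) rb) => cT; apply: (type3_2_between_color _ _ cT).
- by rewrite EX subxx.
- exact: subset_trans (proper_sub (proper_trans h12 h24)) W4Y.
- exact: XW2.
- exact: subset_trans (proper_sub h24) W4Y.
- exact: XW3.
- exact: subset_trans (proper_sub h34) W4Y.
- exact: XW4.
- exact: W4Y.
Qed.

Lemma type3_2_no_rainbow : no_rainbow_B2 c.
Proof.
move=> W1 W2 W3 W4 rb; have [[h12 _ h24 h34] _ _] := rb; have [I II] := type3_2_interior.
case: (rainbow_color_cover (c X0) rb) => /type3_2_X0_color /eqP EX.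
- by move: (type3_2_rainbow_first_X0 rb); rewrite EX.
- by move: (type3_2_rainbow_second_X0 rb); rewrite EX.
- by move: (type3_2_rainbow_second_X0 (rainbow_B2_swap rb)); rewrite EX.
move/eqP: EX => EX.
case: (rainbow_color_cover (c I) rb) => /(type3_2_interior_color II); rewrite inE => /andP[XW _].
- by have := proper_trans XW (proper_trans h12 h24); rewrite EX properxx.
- by have := proper_trans XW h24; rewrite EX properxx.
- by have := proper_trans XW h34; rewrite EX properxx.
- by move: XW; rewrite EX properxx.
Qed.

End Type3_2NoRainbow.

Lemma no_rainbow_of_types (T : finType) (c : {set T} -> 'I_4) :
  Type2 c \/ Type3_1 c \/ Type3_2 c \/ Type4_1 c \/ Type4_2 c -> no_rainbow_B2 c.
Proof.
have type3_2 (c' : {set T} -> 'I_4) : Type3_2 c' -> no_rainbow_B2 c'.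
  by case=> X0 [Y0 [params [md rest]]]; exact: type3_2_no_rainbow params md rest.
have type4_1 (c' : {set T} -> 'I_4) : Type4_1 c' -> no_rainbow_B2 c'.
  case=> X0 [YY [[X0n0 _ YYn0 YYup] [md rest]]].
  exact: type4_1_no_rainbow X0n0 YYn0 YYup md rest.
have c_dual Z : c Z = dual c (~: Z) by rewrite dual_setC.
have from_dual : no_rainbow_B2 (dual c) -> no_rainbow_B2 c := no_rainbow_dual c_dual.
case=> [[X0 [Y0 [params [md rest]]]] | [h | [h | [h | h]]]].
- exact: type2_no_rainbow params md rest.
- exact/from_dual/type3_2/(type3_2_of_dual c_dual).
- exact: type3_2 h.
- exact: type4_1 h.
- exact/from_dual/type4_1/(type4_1_of_dual c_dual).
Qed.

Theorem lemma2p8 (n : nat) (c : {set 'I_n} -> 'I_4) :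
  4 <= n ->
  exact_coloring c ->
  c set0 <> c setT ->
  (no_rainbow_B2 c <->
   Type2 c \/ Type3_1 c \/ Type3_2 c \/ Type4_1 c \/ Type4_2 c).
Proof.
by move=> _ ex ne; split; [exact: types_of_no_rainbow | exact: no_rainbow_of_types].
Qed.
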